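(* Let $a\ge 4$, $b>0$, $d>0$ with $d<b$, let $J_1,J_2$ satisfy the standing assumptions below, and assume the support of $J_2$ is contained in $[-S,S]$ for some $S\in(0,\infty)$. Let $s=s^*$ and let $\lambda_1\in(0,\hat\lambda_2)$ be the double root of $A(\lambda):=d[I_2(\lambda)-1]-s^*\lambda+b=0$ (so that $d\int_{\mathbb{R}}J_2(y)ye^{\lambda_1 y}dy=s^*$). Choose $\lambda_0\in(0,\min\{\lambda_1,\hat\lambda_1\})$ with $I_1(\lambda_0)-1-s^*\lambda_0<0$. Choose $h>\lambda_1 e$ large enough that $hze^{-\lambda_1 z}=1$ has exactly two roots $z_1<z_2$ with $0<z_1<1/\lambda_1<z_2$ and $z_2-z_1>S$. Choose $z_3>z_2$ with $he^{-\lambda_0 z_3}\le a(\lambda_1-\lambda_0)e/4$. Choose $q>0$ large enough that $z_0:=(q/h)^2>z_2$ and $$q>\frac{16bh^2\max_{z>0}\{z^2(z+S)^{3/2}e^{-\lambda_1 z}\}}{d\int_{\mathbb{R}}J_2(y)y^2e^{\lambda_1 y}dy}.$$ Let $g(z):=(hz-q\sqrt z)e^{-\lambda_1 z}$ for $z\ge0$ and let $z_M\in(z_0,\infty)$ be its unique maximum point. Fix $\delta$ with $0<\delta<\min\{g(z_M),\,1-1/a,\,\tfrac12(1-d/b)\}$, let $z_4\in(z_0,z_M)$ satisfy $g(z_4)=\delta$, and choose $$0<\varepsilon<\frac{\min\{\delta,\,hz_4-q\sqrt{z_4}\}}{1+s^*\lambda_1+a}.$$ Define $\overline\phi(z)=1-\varepsilon$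 for $z\le0$, $\overline\phi(z)=1-\varepsilon e^{-\lambda_1 z}$ for $z>0$; $\underline\phi(z)=\tfrac12$ for $z\le z_3$, $\underline\phi(z)=1-\tfrac12e^{-\lambda_0(z-z_3)}$ for $z>z_3$; $\overline\psi(z)=1$ for $z\le z_2$, $\overline\psi(z)=hze^{-\lambda_1 z}$ for $z>z_2$; $\underline\psi(z)=\delta$ for $z\le z_4$, $\underline\psi(z)=(hz-q\sqrt z)e^{-\lambda_1 z}$ for $z>z_4$. Then $(\overline\phi,\overline\psi)$ and $(\underline\phi,\underline\psi)$ are a pair of upper and lower solutions of the traveling wave system with speed $s^*$ (in the sense defined below).
   Context: Standing assumptions: for $i=1,2$, $J_i$ is nonnegative and continuous on $\mathbb{R}$, $\int_{\mathbb{R}}J_i=1$, $J_i(y)=J_i(-y)$, and there is $\hat\lambda_i\in(0,\infty]$ with $I_i(\lambda):=\int_{\mathbb{R}}J_i(y)e^{\lambda y}dy<\infty$ for $\lambda\in(0,\hat\lambda_i)$ and $I_i(\lambda)\to\infty$ as $\lambda\uparrow\hat\lambda_i$. Define $s^*:=\inf_{\lambda\in(0,\hat\lambda_2)}\frac{d[I_2(\lambda)-1]+b}{\lambda}$ (positive and attained). For a function $u$ let $\mathcal{N}_i[u](z):=\int_{\mathbb{R}}J_i(y)u(z-y)dy-u(z)$. Definition: positive continuous functions $(\overline\phi,\overline\psi)$ and $(\underline\phi,\underline\psi)$ are a pair of upper and lower solutions of the system $\mathcal{N}_1[\phi]+s\phi'+a\phi(1-\phi)-\psi=0$, $d\mathcal{N}_2[\psi]+s\psi'+b\psi(1-\psi/\phi)=0$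 if $\underline\phi\le\overline\phi$ and $\underline\psi\le\overline\psi$ on $\mathbb{R}$ and, for all $z\in\mathbb{R}\setminus E$ with $E$ some finite subset of $\mathbb{R}$: $\mathcal{N}_1[\overline\phi](z)+s\overline\phi'(z)+a\overline\phi(z)[1-\overline\phi(z)]-\underline\psi(z)\le0$; $d\mathcal{N}_2[\overline\psi](z)+s\overline\psi'(z)+b\overline\psi(z)[1-\overline\psi(z)/\overline\phi(z)]\le0$; $\mathcal{N}_1[\underline\phi](z)+s\underline\phi'(z)+a\underline\phi(z)[1-\underline\phi(z)]-\overline\psi(z)\ge0$; $d\mathcal{N}_2[\underline\psi](z)+s\underline\psi'(z)+b\underline\psi(z)[1-\underline\psi(z)/\underline\phi(z)]\ge0$. *)

From Stdlib Require Import Reals Lra List.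
From Coquelicot Require Import Coquelicot.
Open Scope R_scope.

Definition RInt_R (f : R -> R) : R :=
  RInt_gen f (Rbar_locally m_infty) (Rbar_locally p_infty).

Definition ex_RInt_R (f : R -> R) : Prop :=
  ex_RInt_gen f (Rbar_locally m_infty) (Rbar_locally p_infty).

Definition Ik (J : R -> R) (lam : R) : R :=
  RInt_R (fun y => J y * exp (lam * y)).

Definition kernel_ok (J : R -> R) (lamhat : Rbar) : Prop :=
  (forall y, 0 <= J y) /\
  (forall y, continuous J y) /\
  is_RInt_gen J (Rbar_locally m_infty) (Rbar_locally p_infty) 1 /\
  (forall y, J y = J (- y)) /\
  Rbar_lt 0 lamhat /\
  (forall lam, 0 < lam -> Rbar_lt lam lamhat ->
      ex_RInt_R (fun y => J y * exp (lam * y))) /\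
  (match lamhat with
   | Finite l => filterlim (Ik J) (at_left l) (Rbar_locally p_infty)
   | p_infty => filterlim (Ik J) (Rbar_locally p_infty) (Rbar_locally p_infty)
   | m_infty => False
   end).

Definition s_star (J2 : R -> R) (lamhat2 : Rbar) (d b : R) : R :=
  real (Glb_Rbar (fun x => exists lam, 0 < lam /\ Rbar_lt lam lamhat2 /\
                     x = (d * (Ik J2 lam - 1) + b) / lam)).

Definition Nop (J u : R -> R) (z : R) : R :=
  RInt_R (fun y => J y * u (z - y)) - u z.

Definition upper_lower_pair (J1 J2 : R -> R) (a b d s : R)
  (phiU psiU phiL psiL : R -> R) : Prop :=
  (forall z, 0 < phiU z /\ 0 < psiU z /\ 0 < phiL z /\ 0 < psiL z) /\
  (forall z, continuous phiU z /\ continuous psiU z /\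
             continuous phiL z /\ continuous psiL z) /\
  (forall z, phiL z <= phiU z /\ psiL z <= psiU z) /\
  exists E : list R, forall z, ~ In z E ->
    ex_derive phiU z /\ ex_derive psiU z /\ ex_derive phiL z /\ ex_derive psiL z /\
    Nop J1 phiU z + s * Derive phiU z + a * phiU z * (1 - phiU z) - psiL z <= 0 /\
    d * Nop J2 psiU z + s * Derive psiU z + b * psiU z * (1 - psiU z / phiU z) <= 0 /\
    Nop J1 phiL z + s * Derive phiL z + a * phiL z * (1 - phiL z) - psiU z >= 0 /\
    d * Nop J2 psiL z + s * Derive psiL z + b * psiL z * (1 - psiL z / phiL z) >= 0.

Definition phi_up (eps lam1 : R) (z : R) : R :=
  if Rle_dec z 0 then 1 - eps else 1 - eps * exp (- lam1 * z).
Definition phi_low (lam0 z3 : R) (z : R) : R :=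
  if Rle_dec z z3 then / 2 else 1 - / 2 * exp (- lam0 * (z - z3)).
Definition psi_up (h lam1 z2 : R) (z : R) : R :=
  if Rle_dec z z2 then 1 else h * z * exp (- lam1 * z).
Definition psi_low (delta h q lam1 z4 : R) (z : R) : R :=
  if Rle_dec z z4 then delta else (h * z - q * sqrt z) * exp (- lam1 * z).

(* The four inequalities are checked pointwise off the break points 0, z2, z3, z4 of the profiles.
   For the phi-equations only the mass of J1 and the bound I1(lam0) < 1 + s* lam0 enter, since the
   profiles of phi lie between constants and 1 - C exp(- lam z).  For the psi-equations the support
   of J2 lies in [-S, S], so psi(z - y) can be compared with a quadratic polynomial in y times
   exp(lam1 y) (exactly for h z exp(- lam1 z), through a second-order Taylor bound on sqrt (z - y)
   for the lower profile), and the nonlocal term becomes a combination of the moments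
   int J2(y) y^k exp(lam1 y).  As lam1 is a double root of A, both A(lam1) = 0 and the first-order
   condition d int J2(y) y exp(lam1 y) = s* hold; they cancel the moments of order 0 and 1, and
   what is left is the positive second moment, which beats the nonlinearity once q is large.
   The lower profile g(z) = (h z - q sqrt z) exp(- lam1 z) stays below delta up to z4 because, in
   t = sqrt z, its slope is exp(- lam1 t^2) times a cubic with negative leading coefficient and
   negative value at 0, which cannot change sign three more times. *)

From Stdlib Require Import Reals Lra List Classical.
From Coquelicot Require Import Coquelicot.
Open Scope R_scope.

Local Notation Fminf := (Rbar_locally m_infty).
Local Notation Fpinf := (Rbar_locally p_infty).

Lemma continuous_of_ex_derive (f : R -> R) (x : R) : ex_derive f x -> continuous f x.
Proof. exact (ex_derive_continuous (K := R_AbsRing) (V := R_NormedModule) f x). Qed.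

Lemma exp_mul_exp_neg (x : R) : exp x * exp (- x) = 1.
Proof. rewrite <- exp_plus, Rplus_opp_r. apply exp_0. Qed.

Lemma exp_lt_1 (x : R) : x < 0 -> exp x < 1.
Proof. intros Hx. rewrite <- exp_0. apply exp_increasing. exact Hx. Qed.

Lemma exp_le_1 (x : R) : x <= 0 -> exp x <= 1.
Proof. intros [Hx|Hx]; [apply Rlt_le, exp_lt_1; auto|rewrite Hx, exp_0; lra]. Qed.

Lemma exp_shift (lam z y : R) : exp (- lam * (z - y)) = exp (- lam * z) * exp (lam * y).
Proof. rewrite <- exp_plus. f_equal. ring. Qed.

Lemma exp_le_inv_one_sub (x : R) : x < 1 -> exp x <= / (1 - x).
Proof.
  intros Hx. apply Rmult_le_reg_r with (1 - x); [lra|].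
  rewrite Rinv_l by lra.
  assert (Hpos := exp_pos x).
  assert (exp x * (1 - x) <= exp x * exp (- x))
    by (apply Rmult_le_compat_l; [lra|]; pose proof (exp_ineq1_le (- x)); lra).
  rewrite exp_mul_exp_neg in H. exact H.
Qed.

(* Via [exp x = exp (x/2)^2 <= (1 - x/2)^-2]. *)
Lemma exp_le_quadratic (x : R) : Rabs x <= 1 -> exp x <= 1 + x + 3 * x ^ 2.
Proof.
  intros Hx. apply Rabs_le_between in Hx.
  set (u := x / 2).
  assert (Hsq : exp x = exp u * exp u) by (rewrite <- exp_plus; f_equal; unfold u; field).
  assert (Hu := exp_le_inv_one_sub u ltac:(unfold u; lra)).
  assert (Hpos := exp_pos u).
  assert (Hpoly : 1 <= (1 - u) ^ 2 * (1 + x + 3 * x ^ 2)).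
  { assert (Hu2 : - (1 / 2) <= u <= 1 / 2) by (unfold u; lra).
    replace x with (2 * u) by (unfold u; field).
    assert (0 <= 9 - 22 * u + 12 * u ^ 2) by nra.
    assert (0 <= u ^ 2 * (9 - 22 * u + 12 * u ^ 2)) by (apply Rmult_le_pos; nra).
    nra. }
  assert (Hinv : / (1 - u) * / (1 - u) <= 1 + x + 3 * x ^ 2).
  { assert (Hsq_pos : 0 < (1 - u) * (1 - u)) by nra.
    rewrite <- Rinv_mult. apply Rmult_le_reg_r with ((1 - u) * (1 - u)); auto.
    rewrite Rinv_l by lra. lra. }
  rewrite Hsq. apply Rle_trans with (/ (1 - u) * / (1 - u)); auto.
  apply Rmult_le_compat; lra.
Qed.

Lemma pow_one_add_le_exp (t : R) (n : nat) : -1 <= t -> (1 + t) ^ n <= exp (INR n * t).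
Proof.
  intros Ht. induction n as [|n IH].
  - simpl. rewrite Rmult_0_l, exp_0. lra.
  - change ((1 + t) ^ S n) with ((1 + t) * (1 + t) ^ n).
    rewrite S_INR, (Rmult_plus_distr_r (INR n) 1 t), Rmult_1_l, exp_plus, (Rmult_comm (1 + t)).
    apply Rmult_le_compat; [apply pow_le; lra | lra | exact IH | apply exp_ineq1_le].
Qed.

Lemma x_exp_neg_le (mu z : R) : 0 < mu -> z * exp (- mu * z) <= / (mu * exp 1).
Proof.
  intros Hmu. assert (He1 := exp_pos 1).
  assert (Hw : mu * z <= exp (mu * z - 1)) by (pose proof (exp_ineq1_le (mu * z - 1)); lra).
  apply Rmult_le_reg_l with (mu * exp 1); [nra|]. rewrite Rinv_r by nra.
  replace (mu * exp 1 * (z * exp (- mu * z))) with (mu * z * exp (- (mu * z - 1)))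
    by (replace (- (mu * z - 1)) with (1 + - mu * z) by ring; rewrite exp_plus; ring).
  apply Rle_trans with (exp (mu * z - 1) * exp (- (mu * z - 1)));
    [apply Rmult_le_compat_r; [left; apply exp_pos|exact Hw]|rewrite exp_mul_exp_neg; lra].
Qed.

Lemma x_exp_neg_antitone (lam x y : R) : 0 < lam -> / lam <= y -> y <= x ->
  x * exp (- lam * x) <= y * exp (- lam * y).
Proof.
  intros Hl Hy Hxy.
  assert (Hly : 1 <= lam * y).
  { apply Rmult_le_compat_l with (r := lam) in Hy; [|lra]. rewrite Rinv_r in Hy by lra. lra. }
  assert (Hx : x <= y * exp (lam * (x - y))).
  { assert (y * (1 + lam * (x - y)) <= y * exp (lam * (x - y)))
      by (apply Rmult_le_compat_l; [nra | apply exp_ineq1_le]).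
    assert (0 <= (lam * y - 1) * (x - y)) by (apply Rmult_le_pos; lra).
    nra. }
  replace (y * exp (- lam * y)) with (y * exp (lam * (x - y)) * exp (- lam * x))
    by (rewrite Rmult_assoc, <- exp_plus; f_equal; f_equal; ring).
  apply Rmult_le_compat_r; [left; apply exp_pos|exact Hx].
Qed.

Lemma sqrt_sub_le_taylor (z y S : R) : 0 < S -> S < z -> - S <= y <= S ->
  sqrt (z - y) <= sqrt z - y / (2 * sqrt z) - y ^ 2 / (8 * ((z + S) * sqrt (z + S))).
Proof.
  intros HS Hz Hy.
  set (u := sqrt z). set (v := sqrt (z - y)). set (w := sqrt (z + S)).
  assert (Hu : u * u = z) by (apply sqrt_sqrt; lra).
  assert (Hv : v * v = z - y) by (apply sqrt_sqrt; lra).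
  assert (Hw : w * w = z + S) by (apply sqrt_sqrt; lra).
  assert (Hu0 : 0 < u) by (apply sqrt_lt_R0; lra).
  assert (Hv0 : 0 <= v) by apply sqrt_pos.
  assert (Huw : u <= w) by (apply sqrt_le_1_alt; lra).
  assert (Hvw : v <= w) by (apply sqrt_le_1_alt; lra).
  replace y with (u * u - v * v) by lra.
  replace (z + S) with (w * w) by lra.
  assert (Hk : 0 <= 4 * (w * w * w) - u * ((u + v) * (u + v))).
  { assert (u * ((u + v) * (u + v)) <= w * (4 * (w * w))) by (apply Rmult_le_compat; nra).
    nra. }
  assert (Heq : u - (u * u - v * v) / (2 * u) - (u * u - v * v) ^ 2 / (8 * (w * w * w)) - v =
     (u - v) ^ 2 * (4 * (w * w * w) - u * ((u + v) * (u + v))) / (8 * u * (w * w * w)))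
    by (field; split; lra).
  assert (0 <= (u - v) ^ 2 * (4 * (w * w * w) - u * ((u + v) * (u + v))) / (8 * u * (w * w * w))).
  { apply Rmult_le_pos; [apply Rmult_le_pos; [apply pow2_ge_0|auto]|].
    left. apply Rinv_0_lt_compat. repeat apply Rmult_lt_0_compat; lra. }
  lra.
Qed.

Lemma Rpower_3_2 (x : R) : 0 < x -> Rpower x (3 / 2) = x * sqrt x.
Proof.
  intros Hx. replace (3 / 2) with (1 + / 2) by field.
  rewrite Rpower_plus, Rpower_1, Rpower_sqrt by auto. reflexivity.
Qed.

Lemma sqrt_le_one_add (x : R) : 0 <= x -> sqrt x <= 1 + x.
Proof. intros Hx. pose proof (sqrt_sqrt x Hx). pose proof (sqrt_pos x). nra. Qed.

Lemma polynomial_exp_weight_bound (S lam z : R) : 0 <= S -> 0 < lam -> 0 < z ->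
  z ^ 2 * Rpower (z + S) (3 / 2) * exp (- lam * z) <= (1 + S) ^ 2 * (1 + 4 / lam) ^ 4.
Proof.
  intros HS Hl Hz.
  rewrite Rpower_3_2 by lra.
  assert (Hsq := sqrt_le_one_add (z + S) ltac:(lra)). assert (Hsq0 := sqrt_pos (z + S)).
  assert (Hpoly : z ^ 2 * ((z + S) * sqrt (z + S)) <= (1 + S) ^ 2 * (1 + z) ^ 4).
  { assert ((z + S) * sqrt (z + S) <= (1 + z + S) * (1 + z + S)) by (apply Rmult_le_compat; lra).
    assert (1 + z + S <= (1 + S) * (1 + z)) by nra.
    assert ((1 + z + S) * (1 + z + S) <= ((1 + S) * (1 + z)) ^ 2) by nra.
    assert (z ^ 2 <= (1 + z) ^ 2) by nra.
    assert (0 <= z ^ 2) by nra. assert (0 <= (z + S) * sqrt (z + S)) by nra.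
    replace ((1 + S) ^ 2 * (1 + z) ^ 4) with ((1 + z) ^ 2 * ((1 + S) * (1 + z)) ^ 2) by ring.
    apply Rmult_le_compat; nra. }
  assert (Hexp : (1 + z) ^ 4 <= (1 + 4 / lam) ^ 4 * exp (lam * z)).
  { assert (H1 : 1 + z <= (1 + 4 / lam) * (1 + lam * z / 4)).
    { replace ((1 + 4 / lam) * (1 + lam * z / 4)) with (1 + z + 4 / lam + lam * z / 4) by (field; lra).
      assert (0 < 4 / lam) by (apply Rdiv_lt_0_compat; lra). nra. }
    assert (H2 := pow_one_add_le_exp (lam * z / 4) 4 ltac:(nra)).
    replace (INR 4 * (lam * z / 4)) with (lam * z) in H2 by (simpl; field).
    apply Rle_trans with (((1 + 4 / lam) * (1 + lam * z / 4)) ^ 4); [apply pow_incr; lra|].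
    rewrite Rpow_mult_distr. apply Rmult_le_compat_l; [apply pow_le|exact H2].
    assert (0 < 4 / lam) by (apply Rdiv_lt_0_compat; lra). lra. }
  assert (Hez := exp_pos (- lam * z)).
  assert (Hcancel : exp (lam * z) * exp (- lam * z) = 1)
    by (rewrite Ropp_mult_distr_l_reverse; apply exp_mul_exp_neg).
  apply Rle_trans with ((1 + S) ^ 2 * (1 + z) ^ 4 * exp (- lam * z)); [apply Rmult_le_compat_r; lra|].
  apply Rle_trans with ((1 + S) ^ 2 * ((1 + 4 / lam) ^ 4 * exp (lam * z)) * exp (- lam * z)).
  - apply Rmult_le_compat_r; [lra|]. apply Rmult_le_compat_l; [apply pow_le; lra|exact Hexp].
  - right. replace ((1 + S) ^ 2 * ((1 + 4 / lam) ^ 4 * exp (lam * z)) * exp (- lam * z))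
      with ((1 + S) ^ 2 * (1 + 4 / lam) ^ 4 * (exp (lam * z) * exp (- lam * z))) by ring.
    rewrite Hcancel. ring.
Qed.

Lemma le_Lub_Rbar_pos (f : R -> R) (C z : R) : (forall x, 0 < x -> f x <= C) -> 0 < z ->
  f z <= real (Lub_Rbar (fun v => exists x, 0 < x /\ v = f x)).
Proof.
  intros HC Hz.
  set (E := fun v => exists x, 0 < x /\ v = f x).
  destruct (Lub_Rbar_correct E) as [Hub Hleast].
  assert (HCub : is_ub_Rbar E C) by (intros v [x [Hx ->]]; simpl; auto).
  apply Hleast in HCub.
  assert (Hfz : E (f z)) by (exists z; auto).
  apply Hub in Hfz.
  destruct (Lub_Rbar E); simpl in *; tauto.
Qed.

Lemma MVT_increase (f df : R -> R) (a b : R) : (forall x, is_derive f x (df x)) -> a < b ->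
  f a < f b -> exists c, a <= c <= b /\ 0 < df c.
Proof.
  intros Hd Hab Hf.
  destruct (MVT_gen f a b df) as [c [Hc Heq]].
  - intros; auto.
  - intros x _. apply continuity_pt_filterlim, continuous_of_ex_derive. exists (df x). auto.
  - rewrite Rmin_left, Rmax_right in Hc by lra. exists c. split; auto.
    destruct (Rlt_le_dec 0 (df c)); auto.
    assert (df c * (b - a) <= 0) by (apply Rmult_le_0_r; lra). lra.
Qed.

Lemma MVT_decrease (f df : R -> R) (a b : R) : (forall x, is_derive f x (df x)) -> a < b ->
  f b < f a -> exists c, a <= c <= b /\ df c < 0.
Proof.
  intros Hd Hab Hf.
  destruct (MVT_increase (fun x => - f x) (fun x => - df x) a b) as [c [Hc Hdc]].
  - intros x. apply (is_derive_opp f x (df x)). auto.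
  - exact Hab.
  - lra.
  - exists c. split; auto. lra.
Qed.

Lemma Rbar_lt_room (x : R) (l : Rbar) : Rbar_lt x l -> exists e, 0 < e /\ Rbar_lt (x + e) l.
Proof.
  destruct l as [l| |]; simpl; intros H; try contradiction.
  - exists ((l - x) / 2). split; lra.
  - exists 1. split; [lra|exact I].
Qed.

Lemma linear_term_vanishes (c M t0 : R) : 0 < t0 ->
  (forall t, Rabs t <= t0 -> 0 <= c * t + M * t ^ 2) -> c = 0.
Proof.
  intros Ht0 Hnn. apply NNPP. intros Hc.
  assert (Hc2 : 0 < c * c) by (destruct (Rlt_or_le c 0); nra).
  assert (HM := Rle_abs M). assert (Hcabs := Rabs_pos c). assert (HMabs := Rabs_pos M).
  set (D := Rabs M + Rabs c / t0 + 1).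
  assert (HD : 0 < D) by (unfold D; assert (0 <= Rabs c / t0) by (apply Rdiv_le_0_compat; lra); lra).
  set (k := / D).
  assert (Hk : 0 < k) by (apply Rinv_0_lt_compat; lra).
  assert (HkD : D * k = 1) by (apply Rinv_r; lra).
  assert (HcD : Rabs c / t0 <= D /\ Rabs M < D)
    by (unfold D; assert (0 <= Rabs c / t0) by (apply Rdiv_le_0_compat; lra); lra).
  assert (Habs : Rabs (- c * k) <= t0).
  { rewrite Rabs_mult, Rabs_Ropp, (Rabs_right k) by lra.
    replace (Rabs c * k) with (t0 * (Rabs c / t0 * k)) by (field; lra).
    apply Rle_trans with (t0 * (D * k)); [|rewrite HkD; lra].
    apply Rmult_le_compat_l; [lra|]. apply Rmult_le_compat_r; lra. }
  specialize (Hnn _ Habs).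
  assert (HMk : M * k < 1).
  { rewrite <- HkD. apply Rle_lt_trans with (Rabs M * k);
      [apply Rmult_le_compat_r|apply Rmult_lt_compat_r]; lra. }
  replace (c * (- c * k) + M * (- c * k) ^ 2) with (c * c * k * (M * k - 1)) in Hnn by ring.
  assert (0 < c * c * k) by nra. nra.
Qed.

(* Third divided difference of a cubic is its leading coefficient. *)
Lemma neg_cubic_sign_pattern_absurd (a3 a2 a1 a0 x0 x1 x2 x3 : R) :
  let p t := a3 * t ^ 3 + a2 * t ^ 2 + a1 * t + a0 in
  a3 < 0 -> x0 < x1 -> x1 < x2 -> x2 < x3 ->
  p x0 < 0 -> 0 < p x1 -> p x2 < 0 -> 0 < p x3 -> False.
Proof.
  intros p Ha3 H01 H12 H23 Hp0 Hp1 Hp2 Hp3.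
  assert (Hdd : - p x0 * ((x2 - x1) * (x3 - x1) * (x3 - x2))
                + p x1 * ((x2 - x0) * (x3 - x0) * (x3 - x2))
                - p x2 * ((x1 - x0) * (x3 - x0) * (x3 - x1))
                + p x3 * ((x1 - x0) * (x2 - x0) * (x2 - x1))
              = a3 * ((x1 - x0) * (x2 - x0) * (x3 - x0) * (x2 - x1) * (x3 - x1) * (x3 - x2)))
    by (unfold p; ring).
  assert (0 < (x1 - x0) * (x2 - x0) * (x3 - x0) * (x2 - x1) * (x3 - x1) * (x3 - x2))
    by (repeat apply Rmult_lt_0_compat; lra).
  assert (0 < - p x0 * ((x2 - x1) * (x3 - x1) * (x3 - x2))) by (repeat apply Rmult_lt_0_compat; lra).
  assert (0 < p x1 * ((x2 - x0) * (x3 - x0) * (x3 - x2))) by (repeat apply Rmult_lt_0_compat; lra).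
  assert (0 < - p x2 * ((x1 - x0) * (x3 - x0) * (x3 - x1))) by (repeat apply Rmult_lt_0_compat; lra).
  assert (0 < p x3 * ((x1 - x0) * (x2 - x0) * (x2 - x1))) by (repeat apply Rmult_lt_0_compat; lra).
  nra.
Qed.
(** * Integrals over the real line *)

Lemma ex_RInt_of_continuous (f : R -> R) (a b : R) :
  (forall x, continuous f x) -> ex_RInt f a b.
Proof. intros Hf. apply (ex_RInt_continuous (V := R_CompleteNormedModule)); auto. Qed.

Lemma RInt_Chasles_R (f : R -> R) (a b c : R) :
  ex_RInt f a b -> ex_RInt f b c -> RInt f a b + RInt f b c = RInt f a c.
Proof. exact (RInt_Chasles f a b c). Qed.

Lemma RInt_eq_0 (f : R -> R) (a b : R) :
  (forall x, Rmin a b < x < Rmax a b -> f x = 0) -> RInt f a b = 0.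
Proof.
  intros Hf. rewrite (RInt_ext f (fun _ => 0)) by exact Hf.
  rewrite RInt_const. apply Rmult_0_r.
Qed.

Lemma RInt_mono_interval (f : R -> R) (a' a b b' : R) :
  (forall x, 0 <= f x) -> (forall u v, ex_RInt f u v) ->
  a' <= a -> a <= b -> b <= b' -> RInt f a b <= RInt f a' b'.
Proof.
  intros Hf Hex Ha Hab Hb.
  rewrite <- (RInt_Chasles_R f a' a b'), <- (RInt_Chasles_R f a b b') by auto.
  assert (0 <= RInt f a' a) by (apply RInt_ge_0; auto).
  assert (0 <= RInt f b b') by (apply RInt_ge_0; auto).
  lra.
Qed.

Section CompactSupport.
Variables (f : R -> R) (S : R).
Hypothesis Hsupp : forall y, f y <> 0 -> - S <= y <= S.
Hypothesis Hex : forall a b, ex_RInt f a b.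

Lemma RInt_outside_support (a b : R) : a <= b -> b <= - S \/ S <= a -> RInt f a b = 0.
Proof.
  intros Hab Hout. apply RInt_eq_0. intros x Hx.
  rewrite Rmin_left, Rmax_right in Hx by lra.
  destruct (Req_dec (f x) 0) as [|Hfx]; auto.
  apply Hsupp in Hfx. lra.
Qed.

Lemma RInt_over_support (x y : R) : x <= - S -> S <= y -> RInt f x y = RInt f (- S) S :> R.
Proof.
  intros Hx Hy.
  rewrite <- (RInt_Chasles_R f x (- S) y), <- (RInt_Chasles_R f (- S) S y) by auto.
  rewrite (RInt_outside_support x (- S)), (RInt_outside_support S y) by lra.
  ring.
Qed.

Lemma is_RInt_gen_compact_support : is_RInt_gen f Fminf Fpinf (RInt f (- S) S).
Proof.
  intros P HP. apply (Filter_prod _ _ _ (fun a => a < - S) (fun b => S < b)).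
  - exists (- S). auto.
  - exists S. auto.
  - intros x y Hx Hy. exists (RInt f x y). split.
    + exact (RInt_correct f x y (Hex x y)).
    + rewrite RInt_over_support by lra. exact (locally_singleton _ _ HP).
Qed.

Lemma RInt_R_compact_support : RInt_R f = RInt f (- S) S.
Proof.
  exact (is_RInt_gen_unique (V := R_CompleteNormedModule) f _ is_RInt_gen_compact_support).
Qed.

End CompactSupport.

Lemma is_RInt_gen_ge0 (f : R -> R) (l : R) :
  is_RInt_gen f Fminf Fpinf l -> (forall x, 0 <= f x) -> 0 <= l.
Proof.
  intros Hf Hpos.
  assert (Hzero : is_RInt_gen (fun y => scal 0 (f y)) Fminf Fpinf (scal 0 l))
    by exact (is_RInt_gen_scal f 0 l Hf).
  assert (Hnorm0 : forall r : R, norm (scal 0 r) = 0).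
  { intros r. change (Rabs (0 * r) = 0). rewrite Rmult_0_l. apply Rabs_R0. }
  rewrite <- (Hnorm0 l).
  apply (RInt_gen_norm (V := R_CompleteNormedModule) (Fa := Fminf) (Fb := Fpinf)
           (fun y => scal 0 (f y)) f (scal 0 l) l); auto.
  - exists (fun a => a < 0) (fun b => 0 < b); try (exists 0; auto).
    intros; simpl; lra.
  - exists (fun _ => True) (fun _ => True); try (exists 0; auto).
    intros; rewrite Hnorm0; apply Hpos.
Qed.

Lemma is_RInt_gen_le (f g : R -> R) (lf lg : R) :
  is_RInt_gen f Fminf Fpinf lf -> is_RInt_gen g Fminf Fpinf lg ->
  (forall x, f x <= g x) -> lf <= lg.
Proof.
  intros Hf Hg Hfg.
  assert (H := is_RInt_gen_ge0 _ _ (is_RInt_gen_minus g f lg lf Hg Hf)).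
  unfold minus, plus, opp in H; simpl in H.
  assert (0 <= lg + - lf); [apply H; intros x; specialize (Hfg x)|]; lra.
Qed.

Lemma RInt_le_is_RInt_gen (g : R -> R) (G a b : R) :
  (forall x, 0 <= g x) -> (forall u v, ex_RInt g u v) ->
  is_RInt_gen g Fminf Fpinf G -> a <= b -> RInt g a b <= G.
Proof.
  intros Hg Hex HG Hab.
  apply Rnot_lt_le. intros Hlt.
  set (e := mkposreal (RInt g a b - G) ltac:(lra)).
  destruct (HG (ball G e) (locally_ball G e)) as [Q R0 [MQ HQ] [MR HR] Himp].
  set (x := Rmin a MQ - 1). set (y := Rmax b MR + 1).
  assert (Hx : x < MQ /\ x <= a) by (unfold x; pose proof (Rmin_l a MQ); pose proof (Rmin_r a MQ); lra).
  assert (Hy : MR < y /\ b <= y) by (unfold y; pose proof (Rmax_l b MR); pose proof (Rmax_r b MR); lra).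
  destruct (Himp x y (HQ x (proj1 Hx)) (HR y (proj1 Hy))) as [v [Hv Hball]].
  apply (is_RInt_unique (V := R_CompleteNormedModule)) in Hv. simpl in Hv.
  assert (RInt g a b <= RInt g x y) by (apply RInt_mono_interval; auto; lra).
  assert (Hclose : Rabs (v - G) < RInt g a b - G) by exact Hball.
  apply Rabs_def2 in Hclose. lra.
Qed.

Lemma ex_RInt_gen_dominated (f g : R -> R) (G : R) :
  (forall x, 0 <= f x <= g x) -> (forall u v, ex_RInt f u v) ->
  (forall u v, ex_RInt g u v) -> is_RInt_gen g Fminf Fpinf G ->
  ex_RInt_gen f Fminf Fpinf.
Proof.
  intros Hfg Hexf Hexg HG.
  set (E := fun v => exists a b, a <= b /\ v = RInt f a b).
  assert (Hbound : bound E).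
  { exists G. intros v [a [b [Hab ->]]].
    apply Rle_trans with (RInt g a b).
    - apply RInt_le; auto. intros; apply Hfg.
    - apply RInt_le_is_RInt_gen; auto. intros x; specialize (Hfg x); lra. }
  destruct (completeness E Hbound) as [L [HLub HLleast]].
  { exists (RInt f 0 0), 0, 0. split; [lra|reflexivity]. }
  exists L. intros P [eps Heps].
  assert (Happrox : exists a0 b0, a0 <= b0 /\ L - eps < RInt f a0 b0).
  { apply NNPP. intros Hn.
    assert (L <= L - eps); [|destruct eps; simpl in *; lra].
    apply HLleast. intros v [a [b [Hab ->]]].
    apply Rnot_lt_le. intros Hlt. apply Hn. exists a, b. auto. }
  destruct Happrox as [a0 [b0 [Hab0 Hlt]]].
  apply (Filter_prod _ _ _ (fun a => a < a0) (fun b => b0 < b));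
    [exists a0; auto | exists b0; auto |].
  intros x y Hx Hy. exists (RInt f x y).
  split; [exact (RInt_correct f x y (Hexf x y))|].
  apply Heps. change (Rabs (RInt f x y - L) < eps).
  assert (RInt f a0 b0 <= RInt f x y)
    by (apply RInt_mono_interval; auto; try lra; intros; apply Hfg).
  assert (RInt f x y <= L) by (apply HLub; exists x, y; split; auto; lra).
  apply Rabs_def1; lra.
Qed.

Lemma RInt_gt_0_of_point (f : R -> R) (a b x0 : R) :
  (forall x, continuous f x) -> (forall x, a <= x <= b -> 0 <= f x) ->
  a < x0 < b -> 0 < f x0 -> 0 < RInt f a b.
Proof.
  intros Hc Hnn Hx0 Hf0.
  destruct (Hc x0 _ (open_gt 0 (f x0) Hf0)) as [del Hdel].
  assert (Hdel0 := cond_pos del).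
  set (eta := Rmin (del / 2) (Rmin ((x0 - a) / 2) ((b - x0) / 2))).
  assert (Heta : 0 < eta /\ eta <= del / 2 /\ eta <= (x0 - a) / 2 /\ eta <= (b - x0) / 2).
  { unfold eta. repeat split.
    - repeat apply Rmin_pos; lra.
    - apply Rmin_l.
    - eapply Rle_trans; [apply Rmin_r|apply Rmin_l].
    - eapply Rle_trans; [apply Rmin_r|apply Rmin_r]. }
  assert (Hex : forall u v, ex_RInt f u v) by (intros; apply ex_RInt_of_continuous; auto).
  rewrite <- (RInt_Chasles_R f a (x0 - eta) b), <- (RInt_Chasles_R f (x0 - eta) (x0 + eta) b) by auto.
  assert (0 <= RInt f a (x0 - eta)) by (apply RInt_ge_0; auto; [lra|intros; apply Hnn; lra]).
  assert (0 <= RInt f (x0 + eta) b) by (apply RInt_ge_0; auto; [lra|intros; apply Hnn; lra]).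
  assert (0 < RInt f (x0 - eta) (x0 + eta)).
  { apply RInt_gt_0; [lra| |auto]. intros x Hx. apply Hdel.
    change (Rabs (x - x0) < del). apply Rabs_def1; lra. }
  lra.
Qed.

Section Piecewise.
Variables (F f g : R -> R) (c : R).
Hypothesis HF : forall y, F y = if Rle_dec y c then f y else g y.

Lemma piecewise_near_left (x : R) : x < c -> locally x (fun t => f t = F t).
Proof.
  intros Hx. apply filter_imp with (fun t => t < c); [|exact (open_lt c x Hx)].
  intros t Ht. rewrite HF. destruct (Rle_dec t c); [reflexivity|lra].
Qed.

Lemma piecewise_near_right (x : R) : c < x -> locally x (fun t => g t = F t).
Proof.
  intros Hx. apply filter_imp with (fun t => c < t); [|exact (open_gt c x Hx)].
  intros t Ht. rewrite HF. destruct (Rle_dec t c); [lra|reflexivity].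
Qed.

Lemma continuous_piecewise (x : R) :
  (x <= c -> continuous f x) -> (c <= x -> continuous g x) -> f c = g c -> continuous F x.
Proof.
  intros Hf Hg Hc.
  destruct (Rlt_le_dec x c) as [Hlt|Hle]; [|destruct (Rlt_le_dec c x) as [Hgt|Hge]].
  - apply continuous_ext_loc with f; [apply piecewise_near_left; auto | apply Hf; lra].
  - apply continuous_ext_loc with g; [apply piecewise_near_right; auto | apply Hg; lra].
  - assert (x = c) by lra. subst x.
    intros P HP. unfold filtermap in *.
    assert (HFc : F c = f c) by (rewrite HF; destruct (Rle_dec c c); [reflexivity|lra]).
    rewrite HFc in HP.
    assert (Hfc := Hf (Rle_refl c) P HP).
    rewrite Hc in HP.
    assert (Hgc := Hg (Rle_refl c) P HP).
    apply filter_imp with (fun y => P (f y) /\ P (g y)); [|apply filter_and; auto].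
    intros y [H1 H2]. rewrite HF. destruct (Rle_dec y c); auto.
Qed.

Lemma is_derive_piecewise_left (x l : R) : x < c -> is_derive f x l -> is_derive F x l.
Proof.
  intros Hx Hd. apply is_derive_ext_loc with f; auto.
  exact (piecewise_near_left x Hx).
Qed.

Lemma is_derive_piecewise_right (x l : R) : c < x -> is_derive g x l -> is_derive F x l.
Proof.
  intros Hx Hd. apply is_derive_ext_loc with g; auto.
  exact (piecewise_near_right x Hx).
Qed.

End Piecewise.

Lemma continuous_phi_up (eps lam1 x : R) : continuous (phi_up eps lam1) x.
Proof.
  apply (continuous_piecewise _ (fun _ => 1 - eps) (fun z => 1 - eps * exp (- lam1 * z)) 0);
    [intros; reflexivity | intros; apply continuous_const
    | intros; apply continuous_of_ex_derive; auto_derive; auto | ].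
  rewrite Rmult_0_r, exp_0. ring.
Qed.

Lemma continuous_phi_low (lam0 z3 x : R) : continuous (phi_low lam0 z3) x.
Proof.
  apply (continuous_piecewise _ (fun _ => / 2) (fun z => 1 - / 2 * exp (- lam0 * (z - z3))) z3);
    [intros; reflexivity | intros; apply continuous_const
    | intros; apply continuous_of_ex_derive; auto_derive; auto | ].
  rewrite Rminus_diag, Rmult_0_r, exp_0. field.
Qed.

Lemma continuous_psi_up (h lam1 z2 x : R) : h * z2 * exp (- lam1 * z2) = 1 ->
  continuous (psi_up h lam1 z2) x.
Proof.
  intros Hz2.
  apply (continuous_piecewise _ (fun _ => 1) (fun z => h * z * exp (- lam1 * z)) z2);
    [intros; reflexivity | intros; apply continuous_const
    | intros; apply continuous_of_ex_derive; auto_derive; auto | auto].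
Qed.

Lemma continuous_psi_low (delta h q lam1 z4 x : R) : 0 < z4 ->
  (h * z4 - q * sqrt z4) * exp (- lam1 * z4) = delta -> continuous (psi_low delta h q lam1 z4) x.
Proof.
  intros Hz4 Hdelta.
  apply (continuous_piecewise _ (fun _ => delta) (fun z => (h * z - q * sqrt z) * exp (- lam1 * z)) z4);
    [intros; reflexivity | intros; apply continuous_const
    | intros; apply continuous_of_ex_derive; auto_derive; lra | auto].
Qed.

Lemma is_derive_phi_up_left (eps lam1 z : R) : z < 0 -> is_derive (phi_up eps lam1) z 0.
Proof.
  intros Hz.
  apply (is_derive_piecewise_left _ (fun _ => 1 - eps) (fun z => 1 - eps * exp (- lam1 * z)) 0);
    [intros; reflexivity | auto | auto_derive; auto; ring].
Qed.

Lemma is_derive_phi_up_right (eps lam1 z : R) : 0 < z ->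
  is_derive (phi_up eps lam1) z (eps * lam1 * exp (- lam1 * z)).
Proof.
  intros Hz.
  apply (is_derive_piecewise_right _ (fun _ => 1 - eps) (fun z => 1 - eps * exp (- lam1 * z)) 0);
    [intros; reflexivity | auto | auto_derive; auto; ring].
Qed.

Lemma is_derive_phi_low_left (lam0 z3 z : R) : z < z3 -> is_derive (phi_low lam0 z3) z 0.
Proof.
  intros Hz.
  apply (is_derive_piecewise_left _ (fun _ => / 2)
           (fun z => 1 - / 2 * exp (- lam0 * (z - z3))) z3);
    [intros; reflexivity | auto | auto_derive; auto; ring].
Qed.

Lemma is_derive_phi_low_right (lam0 z3 z : R) : z3 < z ->
  is_derive (phi_low lam0 z3) z (/ 2 * lam0 * exp (- lam0 * (z - z3))).
Proof.
  intros Hz.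
  apply (is_derive_piecewise_right _ (fun _ => / 2)
           (fun z => 1 - / 2 * exp (- lam0 * (z - z3))) z3);
    [intros; reflexivity | auto | auto_derive; auto; unfold Rminus; ring].
Qed.

Lemma is_derive_psi_up_left (h lam1 z2 z : R) : z < z2 -> is_derive (psi_up h lam1 z2) z 0.
Proof.
  intros Hz. apply (is_derive_piecewise_left _ (fun _ => 1) (fun z => h * z * exp (- lam1 * z)) z2);
    [intros; reflexivity | auto | auto_derive; auto; ring].
Qed.

Lemma is_derive_psi_up_right (h lam1 z2 z : R) : z2 < z ->
  is_derive (psi_up h lam1 z2) z (h * exp (- lam1 * z) * (1 - lam1 * z)).
Proof.
  intros Hz. apply (is_derive_piecewise_right _ (fun _ => 1) (fun z => h * z * exp (- lam1 * z)) z2);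
    [intros; reflexivity | auto | auto_derive; auto; ring].
Qed.

Lemma is_derive_psi_low_left (delta h q lam1 z4 z : R) : z < z4 ->
  is_derive (psi_low delta h q lam1 z4) z 0.
Proof.
  intros Hz.
  apply (is_derive_piecewise_left _ (fun _ => delta)
           (fun z => (h * z - q * sqrt z) * exp (- lam1 * z)) z4);
    [intros; reflexivity | auto | auto_derive; auto; ring].
Qed.

Lemma is_derive_psi_low_right (delta h q lam1 z4 z : R) : 0 < z -> z4 < z ->
  is_derive (psi_low delta h q lam1 z4) z
    (exp (- lam1 * z) * (h - q / (2 * sqrt z)) - lam1 * (h * z - q * sqrt z) * exp (- lam1 * z)).
Proof.
  intros Hz0 Hz. assert (0 < sqrt z) by (apply sqrt_lt_R0; lra).
  apply (is_derive_piecewise_right _ (fun _ => delta)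
           (fun z => (h * z - q * sqrt z) * exp (- lam1 * z)) z4);
    [intros; reflexivity | auto | auto_derive; [lra | field; lra]].
Qed.

Lemma phi_up_bounds (eps lam1 z : R) : 0 <= eps -> 0 < lam1 ->
  1 - eps <= phi_up eps lam1 z <= 1.
Proof.
  intros Heps Hl. unfold phi_up. destruct (Rle_dec z 0); [lra|].
  assert (exp (- lam1 * z) < 1) by (apply exp_lt_1; nra).
  pose proof (exp_pos (- lam1 * z)). nra.
Qed.

Lemma phi_low_bounds (lam0 z3 z : R) : 0 < lam0 -> / 2 <= phi_low lam0 z3 z <= 1.
Proof.
  intros Hl. unfold phi_low. destruct (Rle_dec z z3); [lra|].
  assert (exp (- lam0 * (z - z3)) < 1) by (apply exp_lt_1; nra).
  pose proof (exp_pos (- lam0 * (z - z3))). lra.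
Qed.

Lemma phi_low_minorant (lam0 z3 w : R) : 0 <= lam0 ->
  1 - / 2 * exp (- lam0 * (w - z3)) <= phi_low lam0 z3 w.
Proof.
  intros Hl. unfold phi_low. destruct (Rle_dec w z3); [|lra].
  assert (1 <= exp (- lam0 * (w - z3))); [|lra].
  pose proof (exp_ineq1_le (- lam0 * (w - z3))). nra.
Qed.

(** * Dispersal kernels *)

Lemma continuous_shift_reflect (u : R -> R) (z y : R) : (forall x, continuous u x) ->
  continuous (fun t => u (z - t)) y.
Proof.
  intros Hu. apply (continuous_comp (fun t => z - t) u); [|apply Hu].
  apply continuous_of_ex_derive. auto_derive. auto.
Qed.

Section Kernel.
Variables (J : R -> R) (lh : Rbar).
Hypothesis HJ : kernel_ok J lh.

Lemma kernel_nonneg (y : R) : 0 <= J y.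
Proof. destruct HJ as [H _]. apply H. Qed.

Lemma kernel_continuous (y : R) : continuous J y.
Proof. destruct HJ as [_ [H _]]. apply H. Qed.

Lemma kernel_is_RInt_1 : is_RInt_gen J Fminf Fpinf 1.
Proof. destruct HJ as [_ [_ [H _]]]. exact H. Qed.

Lemma kernel_exp_integrable (lam : R) : 0 < lam -> Rbar_lt lam lh ->
  ex_RInt_R (fun y => J y * exp (lam * y)).
Proof. destruct HJ as [_ [_ [_ [_ [_ [H _]]]]]]. apply H. Qed.

Lemma continuous_kernel_mul (u : R -> R) (y : R) : (forall x, continuous u x) ->
  continuous (fun t => J t * u t) y.
Proof. intros Hu. apply (continuous_mult J u); auto using kernel_continuous. Qed.

Section Convolution.
Variables (phi : R -> R) (z : R).
Hypothesis Hphi_cont : forall x, continuous phi x.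
Hypothesis Hphi_bound : forall x, 0 <= phi x <= 1.

Lemma is_RInt_gen_kernel_conv :
  is_RInt_gen (fun y => J y * phi (z - y)) Fminf Fpinf (RInt_R (fun y => J y * phi (z - y))).
Proof.
  apply (RInt_gen_correct (V := R_CompleteNormedModule)).
  apply ex_RInt_gen_dominated with J 1.
  - intros x. pose proof (kernel_nonneg x). specialize (Hphi_bound (z - x)). split; nra.
  - intros. apply ex_RInt_of_continuous. intros.
    apply continuous_kernel_mul. intros; apply continuous_shift_reflect; auto.
  - intros. apply ex_RInt_of_continuous, kernel_continuous.
  - exact kernel_is_RInt_1.
Qed.

Lemma kernel_conv_le_1 : RInt_R (fun y => J y * phi (z - y)) <= 1.
Proof.
  apply (is_RInt_gen_le _ J _ 1 is_RInt_gen_kernel_conv kernel_is_RInt_1).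
  intros x. pose proof (kernel_nonneg x). specialize (Hphi_bound (z - x)). nra.
Qed.

Lemma kernel_conv_ge_exp_minorant (lam c0 c1 : R) : ex_RInt_R (fun y => J y * exp (lam * y)) ->
  (forall y, c0 + c1 * exp (lam * y) <= phi (z - y)) ->
  c0 + c1 * Ik J lam <= RInt_R (fun y => J y * phi (z - y)).
Proof.
  intros Hex Hminor.
  assert (Hexp : is_RInt_gen (fun y => J y * exp (lam * y)) Fminf Fpinf (Ik J lam))
    by exact (RInt_gen_correct (V := R_CompleteNormedModule) _ Hex).
  assert (Hlin := is_RInt_gen_plus _ _ _ _
                    (is_RInt_gen_scal _ c0 _ kernel_is_RInt_1) (is_RInt_gen_scal _ c1 _ Hexp)).
  replace (c0 + c1 * Ik J lam) with (plus (scal c0 1) (scal c1 (Ik J lam)))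
    by (change (c0 * 1 + c1 * Ik J lam = c0 + c1 * Ik J lam); ring).
  apply (is_RInt_gen_le _ _ _ _ Hlin is_RInt_gen_kernel_conv).
  intros x. change (c0 * J x + c1 * (J x * exp (lam * x)) <= J x * phi (z - x)).
  pose proof (kernel_nonneg x). specialize (Hminor x).
  replace (c0 * J x + c1 * (J x * exp (lam * x))) with (J x * (c0 + c1 * exp (lam * x))) by ring.
  apply Rmult_le_compat_l; auto.
Qed.

End Convolution.
End Kernel.

Section CompactKernel.
Variables (J : R -> R) (lh : Rbar) (S : R).
Hypothesis HJ : kernel_ok J lh.
Hypothesis HS : 0 < S.
Hypothesis Hsupp : forall y, J y <> 0 -> - S <= y <= S.

Lemma RInt_R_kernel_mul (u : R -> R) : (forall x, continuous u x) ->
  RInt_R (fun y => J y * u y) = RInt (fun y => J y * u y) (- S) S.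
Proof.
  intros Hu. apply RInt_R_compact_support; auto.
  - intros y Hy. apply Hsupp. intros HJy. apply Hy. rewrite HJy. ring.
  - intros. apply ex_RInt_of_continuous. intros; apply (continuous_kernel_mul J lh HJ); auto.
Qed.

Lemma RInt_kernel_1 : RInt J (- S) S = 1.
Proof.
  assert (Hex : forall a b, ex_RInt J a b)
    by (intros; apply ex_RInt_of_continuous, (kernel_continuous J lh HJ)).
  assert (H1 := kernel_is_RInt_1 J lh HJ).
  assert (H2 := is_RInt_gen_compact_support J S Hsupp Hex).
  apply (is_RInt_gen_unique (V := R_CompleteNormedModule) J) in H1.
  apply (is_RInt_gen_unique (V := R_CompleteNormedModule) J) in H2.
  rewrite <- H1, <- H2. reflexivity.
Qed.

Definition exp_moment (k : nat) (lam : R) : R :=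
  RInt (fun y => J y * (y ^ k * exp (lam * y))) (- S) S.

Lemma continuous_kernel_pow_exp (k : nat) (lam y : R) :
  continuous (fun y => J y * (y ^ k * exp (lam * y))) y.
Proof.
  apply (continuous_kernel_mul J lh HJ). intros x.
  apply continuous_of_ex_derive. auto_derive. auto.
Qed.

Lemma Ik_eq_exp_moment0 (lam : R) : Ik J lam = exp_moment 0 lam.
Proof.
  unfold Ik. rewrite (RInt_R_kernel_mul (fun y => exp (lam * y))).
  - apply RInt_ext. intros. simpl. ring.
  - intros. apply continuous_of_ex_derive. auto_derive. auto.
Qed.

Lemma Ik_nonneg (lam : R) : 0 <= Ik J lam.
Proof.
  rewrite Ik_eq_exp_moment0. apply RInt_ge_0; [lra| |].
  - apply ex_RInt_of_continuous, continuous_kernel_pow_exp.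
  - intros. apply Rmult_le_pos; [apply (kernel_nonneg J lh HJ)|].
    simpl. rewrite Rmult_1_l. left. apply exp_pos.
Qed.

Lemma RInt_kernel_quadratic_exp (c0 c1 c2 lam : R) :
  RInt (fun y => J y * ((c0 + c1 * y + c2 * y ^ 2) * exp (lam * y))) (- S) S =
  c0 * exp_moment 0 lam + c1 * exp_moment 1 lam + c2 * exp_moment 2 lam.
Proof.
  set (m := fun (k : nat) y => J y * (y ^ k * exp (lam * y))).
  assert (Hm : forall k, is_RInt (m k) (- S) S (exp_moment k lam))
    by (intros; apply (RInt_correct (V := R_CompleteNormedModule)), ex_RInt_of_continuous;
        intros; apply continuous_kernel_pow_exp).
  rewrite (RInt_ext _ (fun y => c0 * m 0%nat y + c1 * m 1%nat y + c2 * m 2%nat y))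
    by (intros; unfold m; simpl; ring).
  apply (is_RInt_unique (V := R_CompleteNormedModule)).
  apply (is_RInt_plus (fun y => c0 * m 0%nat y + c1 * m 1%nat y) (fun y => c2 * m 2%nat y)).
  - apply (is_RInt_plus (fun y => c0 * m 0%nat y) (fun y => c1 * m 1%nat y));
      apply (is_RInt_scal (V := R_NormedModule)); apply Hm.
  - apply (is_RInt_scal (V := R_NormedModule)); apply Hm.
Qed.

Section QuadraticExpBounds.
Variables (v : R -> R) (c0 c1 c2 lam : R).
Hypothesis Hv : forall x, continuous v x.

Let ex_RInt_kernel_mul : ex_RInt (fun y => J y * v y) (- S) S.
Proof. apply ex_RInt_of_continuous. intros; apply (continuous_kernel_mul J lh HJ); auto. Qed.

Let ex_RInt_kernel_quadratic_exp :
  ex_RInt (fun y => J y * ((c0 + c1 * y + c2 * y ^ 2) * exp (lam * y))) (- S) S.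
Proof.
  apply ex_RInt_of_continuous. intros. apply (continuous_kernel_mul J lh HJ).
  intros. apply continuous_of_ex_derive. auto_derive. auto.
Qed.

Lemma RInt_kernel_le_quadratic_exp :
  (forall y, - S <= y <= S -> v y <= (c0 + c1 * y + c2 * y ^ 2) * exp (lam * y)) ->
  RInt (fun y => J y * v y) (- S) S <=
  c0 * exp_moment 0 lam + c1 * exp_moment 1 lam + c2 * exp_moment 2 lam.
Proof.
  intros Hle. rewrite <- RInt_kernel_quadratic_exp.
  apply RInt_le; auto; [lra|]. intros y Hy.
  apply Rmult_le_compat_l; [apply (kernel_nonneg J lh HJ)|apply Hle; lra].
Qed.

Lemma RInt_kernel_ge_quadratic_exp :
  (forall y, - S <= y <= S -> (c0 + c1 * y + c2 * y ^ 2) * exp (lam * y) <= v y) ->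
  c0 * exp_moment 0 lam + c1 * exp_moment 1 lam + c2 * exp_moment 2 lam <=
  RInt (fun y => J y * v y) (- S) S.
Proof.
  intros Hge. rewrite <- RInt_kernel_quadratic_exp.
  apply RInt_le; auto; [lra|]. intros y Hy.
  apply Rmult_le_compat_l; [apply (kernel_nonneg J lh HJ)|apply Hge; lra].
Qed.

End QuadraticExpBounds.

Lemma Ik_shift_le (lam t : R) : Rabs t * S <= 1 ->
  Ik J (lam + t) <= exp_moment 0 lam + t * exp_moment 1 lam + 3 * t ^ 2 * exp_moment 2 lam.
Proof.
  intros Ht. rewrite Ik_eq_exp_moment0, <- (Rmult_1_l (exp_moment 0 lam)).
  apply RInt_kernel_le_quadratic_exp.
  - intros. apply continuous_of_ex_derive. auto_derive. auto.
  - intros y Hy.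
    assert (Hty : Rabs (t * y) <= 1).
    { rewrite Rabs_mult. apply Rle_trans with (Rabs t * S); auto.
      apply Rmult_le_compat_l; [apply Rabs_pos|apply Rabs_le; lra]. }
    assert (Hq := exp_le_quadratic _ Hty). assert (He := exp_pos (lam * y)).
    replace ((lam + t) * y) with (lam * y + t * y) by ring. rewrite exp_plus.
    replace ((1 + t * y + 3 * t ^ 2 * y ^ 2) * exp (lam * y))
      with (exp (lam * y) * (1 + t * y + 3 * (t * y) ^ 2)) by ring.
    simpl. rewrite Rmult_1_l. apply Rmult_le_compat_l; lra.
Qed.

Lemma kernel_pos_off_origin : exists y0, - S < y0 < S /\ y0 <> 0 /\ 0 < J y0.
Proof.
  apply NNPP. intros Hn.
  assert (Hzero : forall a b, (a = - S /\ b = 0) \/ (a = 0 /\ b = S) -> RInt J a b = 0).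
  { intros a b Hab. apply RInt_eq_0. intros x Hx.
    rewrite Rmin_left, Rmax_right in Hx by lra.
    destruct (kernel_nonneg J lh HJ x) as [Hpos|]; auto.
    exfalso. apply Hn. exists x. repeat split; auto; lra. }
  assert (Hex : forall a b, ex_RInt J a b)
    by (intros; apply ex_RInt_of_continuous, (kernel_continuous J lh HJ)).
  pose proof RInt_kernel_1 as H1.
  rewrite <- (RInt_Chasles_R J (- S) 0 S), !Hzero in H1 by auto. lra.
Qed.

Lemma exp_moment2_pos (lam : R) : 0 < exp_moment 2 lam.
Proof.
  destruct kernel_pos_off_origin as [y0 [Hy0 [Hy0n Hy0p]]].
  apply RInt_gt_0_of_point with y0; [apply continuous_kernel_pow_exp | | lra | ].
  - intros. apply Rmult_le_pos; [apply (kernel_nonneg J lh HJ)|].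
    apply Rmult_le_pos; [apply pow2_ge_0|left; apply exp_pos].
  - apply Rmult_lt_0_compat; auto.
    apply Rmult_lt_0_compat; [apply pow2_gt_0; auto|apply exp_pos].
Qed.

Lemma RInt_R_pow_exp (k : nat) (lam : R) :
  RInt_R (fun y => J y * y ^ k * exp (lam * y)) = exp_moment k lam.
Proof.
  rewrite (RInt_R_compact_support _ S).
  - apply RInt_ext. intros. apply Rmult_assoc.
  - intros y Hy. apply Hsupp. intros HJy. apply Hy. rewrite HJy. ring.
  - intros. apply ex_RInt_of_continuous. intros.
    apply (continuous_ext (fun y => J y * (y ^ k * exp (lam * y))));
      [intros; symmetry; apply Rmult_assoc|].
    apply continuous_kernel_pow_exp.
Qed.

Lemma s_star_spec (b d lam1 : R) : 0 < d -> d < b -> 0 < lam1 -> Rbar_lt lam1 lh ->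
  0 <= s_star J lh d b /\
  forall mu, 0 < mu -> Rbar_lt mu lh -> s_star J lh d b * mu <= d * (Ik J mu - 1) + b.
Proof.
  intros Hd Hdb Hl1 Hl1h. unfold s_star.
  set (E := fun x => exists lam, 0 < lam /\ Rbar_lt lam lh /\ x = (d * (Ik J lam - 1) + b) / lam).
  destruct (Glb_Rbar_correct E) as [Hlb Hglb].
  assert (H0 : is_lb_Rbar E 0).
  { intros x [lam [Hlam [_ ->]]]. simpl. pose proof (Ik_nonneg lam).
    left. apply Rdiv_lt_0_compat; nra. }
  apply Hglb in H0.
  assert (HE : forall mu, 0 < mu -> Rbar_lt mu lh -> Rbar_le (Glb_Rbar E) ((d * (Ik J mu - 1) + b) / mu))
    by (intros mu Hmu Hmuh; apply Hlb; exists mu; auto).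
  specialize (HE lam1 Hl1 Hl1h) as Hfin.
  destruct (Glb_Rbar E) as [s| |]; simpl in *; try contradiction.
  split; auto. intros mu Hmu Hmuh.
  specialize (HE mu Hmu Hmuh). simpl in HE.
  apply Rmult_le_compat_r with (r := mu) in HE; [|lra].
  unfold Rdiv in HE. rewrite Rmult_assoc, Rinv_l in HE by lra. lra.
Qed.

(* [t |-> d (Ik J (lam1 + t) - 1) + b - s (lam1 + t)] is nonnegative near [0], vanishes at [0]
   and, by [Ik_shift_le], is at most [t (d * exp_moment 1 lam1 - s) + O(t^2)]. *)
Lemma double_root_first_moment (b d s lam1 : R) : 0 < d -> 0 < lam1 -> Rbar_lt lam1 lh ->
  (forall mu, 0 < mu -> Rbar_lt mu lh -> s * mu <= d * (Ik J mu - 1) + b) ->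
  d * (Ik J lam1 - 1) - s * lam1 + b = 0 ->
  d * exp_moment 1 lam1 = s.
Proof.
  intros Hd Hl1 Hl1h Hmin Hroot.
  destruct (Rbar_lt_room lam1 lh Hl1h) as [e [He Hroom]].
  set (t0 := Rmin (Rmin (lam1 / 2) e) (/ S)).
  assert (Ht0 : 0 < t0 /\ t0 <= lam1 / 2 /\ t0 <= e /\ t0 <= / S).
  { assert (0 < / S) by (apply Rinv_0_lt_compat; lra).
    unfold t0. repeat split.
    - repeat apply Rmin_pos; lra.
    - eapply Rle_trans; [apply Rmin_l|apply Rmin_l].
    - eapply Rle_trans; [apply Rmin_l|apply Rmin_r].
    - apply Rmin_r. }
  assert (Hc : d * exp_moment 1 lam1 - s = 0); [|lra].
  apply (linear_term_vanishes _ (3 * d * exp_moment 2 lam1) t0); [lra|].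
  intros t Ht. apply Rabs_le_between in Ht as Ht'.
  assert (HtS : Rabs t * S <= 1).
  { apply Rle_trans with (/ S * S); [apply Rmult_le_compat_r; lra|].
    rewrite Rinv_l; lra. }
  assert (Hmu := Hmin (lam1 + t) ltac:(lra)
                  (Rbar_le_lt_trans (lam1 + t) (lam1 + e) lh ltac:(simpl; lra) Hroom)).
  assert (Hup := Rmult_le_compat_l d _ _ ltac:(lra) (Ik_shift_le lam1 t HtS)).
  rewrite Ik_eq_exp_moment0 in Hroot. lra.
Qed.

End CompactKernel.

(** * Shape of the profiles *)

Section UpperPsi.
Variables (h lam1 z1 z2 : R).
Hypothesis Hl1 : 0 < lam1.
Hypothesis Hh : h > lam1 * exp 1.
Hypothesis Hz2 : h * z2 * exp (- lam1 * z2) = 1.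
Hypothesis Hroots : forall z, h * z * exp (- lam1 * z) = 1 -> z = z1 \/ z = z2.
Hypothesis Hz2l : / lam1 < z2.

Lemma h_pos : 0 < h.
Proof. pose proof (exp_pos 1). nra. Qed.

Lemma h_x_exp_le_1 (x : R) : z2 <= x -> h * x * exp (- lam1 * x) <= 1.
Proof.
  intros Hx. rewrite <- Hz2, !Rmult_assoc.
  apply Rmult_le_compat_l; [left; apply h_pos|]. apply x_exp_neg_antitone; lra.
Qed.

Lemma psi_up_le_1 (x : R) : psi_up h lam1 z2 x <= 1.
Proof. unfold psi_up. destruct (Rle_dec x z2); [lra|]. apply h_x_exp_le_1. lra. Qed.

Lemma h_x_exp_ge_1 (x : R) : z1 < x -> x <= z2 -> 1 <= h * x * exp (- lam1 * x).
Proof.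
  intros H1 H2. destruct (Rle_dec (/ lam1) x) as [Hbig|Hsmall].
  - rewrite <- Hz2, !Rmult_assoc.
    apply Rmult_le_compat_l; [left; apply h_pos|]. apply x_exp_neg_antitone; lra.
  - set (f := fun t => h * t * exp (- lam1 * t)).
    apply Rnot_lt_le. intros Hlt.
    assert (Hc : continuity f)
      by (intros t; apply continuity_pt_filterlim, continuous_of_ex_derive; unfold f; auto_derive; auto).
    assert (Hpeak : 1 < f (/ lam1)).
    { unfold f. replace (- lam1 * / lam1) with (- (1)) by (field; lra).
      rewrite exp_Ropp. assert (He := exp_pos 1).
      replace (h * / lam1 * / exp 1) with (h / (lam1 * exp 1)) by (field; lra).
      apply Rmult_lt_reg_r with (lam1 * exp 1); [nra|].
      unfold Rdiv. rewrite Rmult_assoc, Rinv_l by nra. lra. }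
    destruct (IVT_gen f x (/ lam1) 1 Hc) as [x' [Hx' Hfx']].
    { split; [apply Rle_trans with (f x); [apply Rmin_l|unfold f; lra]
             |apply Rle_trans with (f (/ lam1)); [lra|apply Rmax_r]]. }
    rewrite Rmin_left, Rmax_right in Hx' by lra.
    destruct (Hroots x' Hfx'); lra.
Qed.

Lemma psi_up_le_profile (x : R) : z1 < x -> psi_up h lam1 z2 x <= h * x * exp (- lam1 * x).
Proof.
  intros Hx. unfold psi_up. destruct (Rle_dec x z2); [apply h_x_exp_ge_1; auto|lra].
Qed.

End UpperPsi.

Section LowerProfile.
Variables (h q lam : R).
Hypothesis Hh : 0 < h.
Hypothesis Hq : 0 < q.
Hypothesis Hl : 0 < lam.

Definition g_profile (z : R) : R := (h * z - q * sqrt z) * exp (- lam * z).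

Definition g_sq (t : R) : R := (h * t ^ 2 - q * t) * exp (- lam * t ^ 2).
Definition g_sq_slope (t : R) : R := - (lam * h) * t ^ 3 + lam * q * t ^ 2 + h * t + - (q / 2).

Lemma is_derive_g_sq (t : R) : is_derive g_sq t (2 * exp (- lam * t ^ 2) * g_sq_slope t).
Proof.
  unfold g_sq, g_sq_slope. auto_derive; auto.
  replace (t * (t * 1)) with (t ^ 2) by ring. field.
Qed.

Lemma g_profile_sqrt (z : R) : 0 <= z -> g_profile z = g_sq (sqrt z).
Proof. intros Hz. unfold g_profile, g_sq. rewrite pow2_sqrt by auto. reflexivity. Qed.

Lemma g_sq_rise (a b : R) : a < b -> g_sq a < g_sq b -> exists c, a <= c <= b /\ 0 < g_sq_slope c.
Proof.
  intros Hab Hg. destruct (MVT_increase g_sq _ a b is_derive_g_sq Hab Hg) as [c [Hc Hpos]].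
  exists c. split; auto. pose proof (exp_pos (- lam * c ^ 2)).
  destruct (Rlt_le_dec 0 (g_sq_slope c)); auto. nra.
Qed.

Lemma g_sq_fall (a b : R) : a < b -> g_sq b < g_sq a -> exists c, a <= c <= b /\ g_sq_slope c < 0.
Proof.
  intros Hab Hg. destruct (MVT_decrease g_sq _ a b is_derive_g_sq Hab Hg) as [c [Hc Hneg]].
  exists c. split; auto. pose proof (exp_pos (- lam * c ^ 2)).
  destruct (Rlt_le_dec (g_sq_slope c) 0); auto. nra.
Qed.

Lemma g_profile_nonpos (z : R) : z <= (q / h) ^ 2 -> g_profile z <= 0.
Proof.
  intros Hz. unfold g_profile. pose proof (exp_pos (- lam * z)).
  apply Rmult_le_0_r; [|lra].
  destruct (Rle_dec z 0) as [Hneg|Hpos].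
  - rewrite sqrt_neg_0 by auto. nra.
  - assert (Hs : sqrt z <= q / h).
    { rewrite <- (sqrt_pow2 (q / h)) by (apply Rlt_le, Rdiv_lt_0_compat; auto).
      apply sqrt_le_1_alt; auto. }
    assert (h * sqrt z <= q).
    { apply Rmult_le_compat_l with (r := h) in Hs; [|lra].
      replace (h * (q / h)) with q in Hs by (field; lra). exact Hs. }
    rewrite <- (sqrt_sqrt z) at 1 by lra. pose proof (sqrt_pos z). nra.
Qed.

(* [g_sq] would rise, fall and rise again after [q/h], where it vanishes; with [g_sq_slope 0 < 0]
   this forces four sign changes of the cubic [g_sq_slope]. *)
Lemma g_profile_le_before_rise (x z4 zM : R) : x <= z4 -> z4 < zM ->
  0 < g_profile z4 -> g_profile z4 < g_profile zM -> g_profile x <= g_profile z4.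
Proof.
  intros Hx Hz4M Hg4 Hg4M.
  destruct (Rle_dec x ((q / h) ^ 2)) as [Hsmall|Hbig]; [pose proof (g_profile_nonpos x Hsmall); lra|].
  apply Rnot_lt_le. intros Hgx.
  assert (Ht0 : 0 < q / h) by (apply Rdiv_lt_0_compat; auto).
  assert (Hx0 : 0 < x) by (pose proof (pow_lt (q / h) 2 Ht0); lra).
  assert (Hxz4 : x < z4) by (destruct (Req_dec x z4); [subst; lra|lra]).
  assert (H0x : q / h < sqrt x).
  { rewrite <- (sqrt_pow2 (q / h)) by lra. apply sqrt_lt_1_alt; split; [apply pow2_ge_0|lra]. }
  assert (Hx4 := sqrt_lt_1_alt x z4 ltac:(lra)).
  assert (H4M := sqrt_lt_1_alt z4 zM ltac:(lra)).
  assert (Hg0 : g_sq (q / h) = 0) by (unfold g_sq; field_simplify; [field|]; lra).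
  rewrite (g_profile_sqrt x) in Hgx by lra. rewrite (g_profile_sqrt zM) in Hg4M by lra.
  rewrite (g_profile_sqrt z4) in Hg4, Hg4M, Hgx by lra.
  destruct (g_sq_rise _ _ H0x ltac:(lra)) as [c0 [Hc0 Hs0]].
  destruct (g_sq_fall _ _ Hx4 ltac:(lra)) as [c1 [Hc1 Hs1]].
  destruct (g_sq_rise _ _ H4M ltac:(lra)) as [c2 [Hc2 Hs2]].
  assert (c0 <> c1) by (intros ->; lra). assert (c1 <> c2) by (intros ->; lra).
  refine (neg_cubic_sign_pattern_absurd (- (lam * h)) (lam * q) h (- (q / 2)) 0 c0 c1 c2
            _ _ _ _ _ Hs0 Hs1 Hs2); [nra|lra|lra|lra|].
  simpl. lra.
Qed.

Lemma amplitude_mono (z4 z : R) : (q / h) ^ 2 < z4 -> z4 <= z ->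
  h * z4 - q * sqrt z4 <= h * z - q * sqrt z.
Proof.
  intros Hz4 Hz.
  assert (Ht0 : 0 < q / h) by (apply Rdiv_lt_0_compat; auto).
  assert (Hs4 : q / h < sqrt z4).
  { rewrite <- (sqrt_pow2 (q / h)) by lra. apply sqrt_lt_1_alt; split; [apply pow2_ge_0|lra]. }
  assert (Hsz : sqrt z4 <= sqrt z) by (apply sqrt_le_1_alt; auto).
  assert (Hq4 : q < h * sqrt z4).
  { apply Rmult_lt_compat_l with (r := h) in Hs4; auto.
    replace (h * (q / h)) with q in Hs4 by (field; lra). exact Hs4. }
  pose proof (pow2_ge_0 (q / h)).
  assert (E4 : z4 = sqrt z4 * sqrt z4) by (symmetry; apply sqrt_sqrt; lra).
  assert (Ez : z = sqrt z * sqrt z) by (symmetry; apply sqrt_sqrt; lra).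
  assert (0 <= (sqrt z - sqrt z4) * (h * (sqrt z + sqrt z4) - q))
    by (apply Rmult_le_pos; [lra|]; pose proof (sqrt_pos z); nra).
  rewrite E4 at 1. rewrite Ez at 1. nra.
Qed.

End LowerProfile.

(** * The four inequalities *)

Section Construction.
Variables (a b d s : R) (J1 J2 : R -> R) (lh1 lh2 : Rbar)
  (S lam0 lam1 h z1 z2 z3 q zM delta z4 eps : R).
Hypothesis Ha : 4 <= a.
Hypothesis Hb : 0 < b.
Hypothesis Hd : 0 < d.
Hypothesis Hs : 0 <= s.
Hypothesis HJ1 : kernel_ok J1 lh1.
Hypothesis HJ2 : kernel_ok J2 lh2.
Hypothesis HS : 0 < S.
Hypothesis Hsupp : forall y, J2 y <> 0 -> - S <= y <= S.
Hypothesis Hl1 : 0 < lam1.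
Hypothesis Hroot : d * (Ik J2 lam1 - 1) - s * lam1 + b = 0.
Hypothesis Hmoment : d * exp_moment J2 S 1 lam1 = s.
Hypothesis Hl0 : 0 < lam0.
Hypothesis Hl01 : lam0 < lam1.
Hypothesis Hl0h : Rbar_lt lam0 lh1.
Hypothesis HI1 : Ik J1 lam0 - 1 - s * lam0 < 0.
Hypothesis Hh : h > lam1 * exp 1.
Hypothesis Hz2 : h * z2 * exp (- lam1 * z2) = 1.
Hypothesis Hroots : forall z, h * z * exp (- lam1 * z) = 1 -> z = z1 \/ z = z2.
Hypothesis Hz1 : 0 < z1.
Hypothesis Hz2l : / lam1 < z2.
Hypothesis Hz12 : z2 - z1 > S.
Hypothesis Hz3 : z3 > z2.
Hypothesis Hz3h : h * exp (- lam0 * z3) <= a * (lam1 - lam0) * exp 1 / 4.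
Hypothesis Hq : 0 < q.
Hypothesis Hqz2 : (q / h) ^ 2 > z2.
Hypothesis Hq_large : forall z, 0 < z ->
  16 * b * h ^ 2 * (z ^ 2 * ((z + S) * sqrt (z + S)) * exp (- lam1 * z)) <
  q * (d * exp_moment J2 S 2 lam1).
Hypothesis Hdelta : 0 < delta.
Hypothesis Hdelta_db : delta < / 2 * (1 - d / b).
Hypothesis Hz4 : (q / h) ^ 2 < z4.
Hypothesis Hz4M : z4 < zM.
Hypothesis Hg4 : g_profile h q lam1 z4 = delta.
Hypothesis HgM : delta < g_profile h q lam1 zM.
Hypothesis Heps : 0 < eps.
Hypothesis Heps_small : eps * (1 + s * lam1 + a) < Rmin delta (h * z4 - q * sqrt z4).

Local Notation phiU := (phi_up eps lam1).
Local Notation phiL := (phi_low lam0 z3).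
Local Notation psiU := (psi_up h lam1 z2).
Local Notation psiL := (psi_low delta h q lam1 z4).

Let h_gt0 : 0 < h := h_pos h lam1 Hl1 Hh.

Let eps_D_lt :
  eps * (1 + s * lam1 + a) < delta /\ eps * (1 + s * lam1 + a) < h * z4 - q * sqrt z4.
Proof.
  pose proof (Rmin_l delta (h * z4 - q * sqrt z4)). pose proof (Rmin_r delta (h * z4 - q * sqrt z4)).
  lra.
Qed.

Let delta_lt_half : delta < / 2.
Proof.
  assert (0 < d / b) by (apply Rdiv_lt_0_compat; lra). lra.
Qed.

Let eps_lt_delta : eps < delta.
Proof.
  destruct eps_D_lt as [Hdel _]. assert (0 <= eps * (s * lam1)) by (apply Rmult_le_pos; nra). nra.
Qed.

Let amplitude_pos (z : R) : z4 <= z -> 0 < h * z - q * sqrt z.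
Proof.
  intros Hz. pose proof (amplitude_mono h q h_gt0 Hq z4 z Hz4 Hz).
  destruct eps_D_lt as [_ Hamp]. assert (0 <= eps * (1 + s * lam1 + a)) by (apply Rmult_le_pos; nra).
  lra.
Qed.

Lemma psi_up_pos (z : R) : 0 < psiU z.
Proof.
  unfold psi_up. destruct (Rle_dec z z2); [lra|].
  apply Rmult_lt_0_compat; [apply Rmult_lt_0_compat; lra|apply exp_pos].
Qed.

Lemma psi_low_pos (z : R) : 0 < psiL z.
Proof.
  unfold psi_low. destruct (Rle_dec z z4); [lra|].
  apply Rmult_lt_0_compat; [apply amplitude_pos; lra|apply exp_pos].
Qed.

Lemma g_profile_le_psi_low (z : R) : g_profile h q lam1 z <= psiL z.
Proof.
  unfold psi_low. destruct (Rle_dec z z4) as [Hle|]; [|unfold g_profile; lra].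
  rewrite <- Hg4. apply (g_profile_le_before_rise h q lam1 h_gt0 Hq Hl1 z z4 zM); lra.
Qed.

Lemma psi_low_ge_exp (z : R) : 0 <= z ->
  eps * (1 + s * lam1 + a) * exp (- lam1 * z) <= psiL z.
Proof.
  intros Hz. destruct eps_D_lt as [Hdel Hamp]. pose proof (exp_pos (- lam1 * z)).
  unfold psi_low. destruct (Rle_dec z z4).
  - assert (exp (- lam1 * z) <= 1) by (apply exp_le_1; nra).
    assert (0 <= eps * (1 + s * lam1 + a)) by (apply Rmult_le_pos; nra). nra.
  - apply Rmult_le_compat_r; [lra|].
    pose proof (amplitude_mono h q h_gt0 Hq z4 z Hz4 ltac:(lra)). lra.
Qed.

Lemma phi_up_supersolution (z : R) : z <> 0 ->
  Nop J1 phiU z + s * Derive phiU z + a * phiU z * (1 - phiU z) - psiL z <= 0.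
Proof.
  intros Hz. unfold Nop.
  assert (Hconv : RInt_R (fun y => J1 y * phiU (z - y)) <= 1).
  { apply (kernel_conv_le_1 J1 lh1 HJ1); [apply continuous_phi_up|].
    intros x. pose proof (phi_up_bounds eps lam1 x ltac:(lra) Hl1). lra. }
  assert (Hsl : 0 <= eps * (s * lam1)) by (apply Rmult_le_pos; nra).
  destruct (Rtotal_order z 0) as [Hneg|[Hzero|Hpos]]; [|contradiction|].
  - rewrite (is_derive_unique _ _ _ (is_derive_phi_up_left eps lam1 z Hneg)).
    replace (phiU z) with (1 - eps) by (unfold phi_up; destruct (Rle_dec z 0); lra).
    replace (psiL z) with delta by (unfold psi_low; destruct (Rle_dec z z4); lra).
    destruct eps_D_lt as [Hdel _]. nra.
  - rewrite (is_derive_unique _ _ _ (is_derive_phi_up_right eps lam1 z Hpos)).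
    replace (phiU z) with (1 - eps * exp (- lam1 * z)) by (unfold phi_up; destruct (Rle_dec z 0); lra).
    pose proof (psi_low_ge_exp z ltac:(lra)).
    assert (HE : 0 < exp (- lam1 * z) < 1) by (split; [apply exp_pos|apply exp_lt_1; nra]).
    assert (0 <= a * (eps * exp (- lam1 * z)) ^ 2) by (apply Rmult_le_pos; nra).
    nra.
Qed.

(* [z exp (- (lam1 - lam0) z)] is at most its maximum [/ ((lam1 - lam0) e)]. *)
Lemma psi_up_tail_le (z : R) : 0 <= z -> h * z * exp (- lam1 * z) <= a / 4 * exp (- lam0 * (z - z3)).
Proof.
  intros Hz.
  assert (Hsplit : exp (- lam1 * z) =
                   exp (- lam0 * z3) * exp (- (lam1 - lam0) * z) * exp (- lam0 * (z - z3)))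
    by (rewrite <- !exp_plus; f_equal; ring).
  rewrite Hsplit.
  replace (h * z * (exp (- lam0 * z3) * exp (- (lam1 - lam0) * z) * exp (- lam0 * (z - z3))))
    with (h * exp (- lam0 * z3) * (z * exp (- (lam1 - lam0) * z)) * exp (- lam0 * (z - z3)))
    by ring.
  assert (Hz_exp := x_exp_neg_le (lam1 - lam0) z ltac:(lra)).
  pose proof (exp_pos (- lam0 * (z - z3))). pose proof (exp_pos 1). pose proof (exp_pos (- lam0 * z3)).
  apply Rmult_le_compat_r; [lra|].
  apply Rle_trans with (a * (lam1 - lam0) * exp 1 / 4 * / ((lam1 - lam0) * exp 1));
    [apply Rmult_le_compat; [nra| |lra|lra]|right; field; split; lra].
  pose proof (exp_pos (- (lam1 - lam0) * z)). nra.
Qed.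

Lemma phi_low_subsolution (z : R) : z <> z3 ->
  Nop J1 phiL z + s * Derive phiL z + a * phiL z * (1 - phiL z) - psiU z >= 0.
Proof.
  intros Hz. unfold Nop.
  assert (Hbounds := fun x => phi_low_bounds lam0 z3 x Hl0).
  assert (Hbounds01 : forall x, 0 <= phiL x <= 1) by (intros x; specialize (Hbounds x); lra).
  assert (Hex1 := kernel_exp_integrable J1 lh1 HJ1 lam0 Hl0 Hl0h).
  assert (Hconv := kernel_conv_ge_exp_minorant J1 lh1 HJ1 phiL z
                     (continuous_phi_low lam0 z3) Hbounds01 lam0).
  destruct (Rtotal_order z z3) as [Hneg|[Hzero|Hpos]]; [|contradiction|].
  - rewrite (is_derive_unique _ _ _ (is_derive_phi_low_left lam0 z3 z Hneg)).
    replace (phiL z) with (/ 2) by (unfold phi_low; destruct (Rle_dec z z3); lra).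
    specialize (Hconv (/ 2) 0 Hex1 ltac:(intros y; specialize (Hbounds (z - y)); lra)).
    pose proof (psi_up_le_1 h lam1 z2 Hl1 Hh Hz2 Hz2l z). lra.
  - rewrite (is_derive_unique _ _ _ (is_derive_phi_low_right lam0 z3 z Hpos)).
    set (c := exp (- lam0 * (z - z3))).
    assert (Hc : 0 < c < 1) by (split; [apply exp_pos|apply exp_lt_1; nra]).
    replace (phiL z) with (1 - / 2 * c) by (unfold phi_low, c; destruct (Rle_dec z z3); lra).
    replace (psiU z) with (h * z * exp (- lam1 * z)) by (unfold psi_up; destruct (Rle_dec z z2); lra).
    assert (Hminor : forall y, 1 + - / 2 * c * exp (lam0 * y) <= phiL (z - y)).
    { intros y.
      assert (Hcy : c * exp (lam0 * y) = exp (- lam0 * (z - y - z3)))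
        by (unfold c; rewrite <- exp_plus; f_equal; ring).
      replace (1 + - / 2 * c * exp (lam0 * y)) with (1 - / 2 * exp (- lam0 * (z - y - z3)))
        by (rewrite <- Hcy; ring).
      apply phi_low_minorant. lra. }
    specialize (Hconv 1 (- / 2 * c) Hex1 Hminor).
    assert (Hpsi := psi_up_tail_le z ltac:(lra)). fold c in Hpsi.
    assert (0 <= c * (1 - Ik J1 lam0 + s * lam0)) by (apply Rmult_le_pos; lra).
    assert (0 <= a * c * (1 - c)) by (apply Rmult_le_pos; [apply Rmult_le_pos|]; lra).
    lra.
Qed.

Let phi_up_range (z : R) : 1 - eps <= phiU z <= 1 := phi_up_bounds eps lam1 z (Rlt_le _ _ Heps) Hl1.

Let continuous_psi_up_shift (z y : R) : continuous (fun t => psiU (z - t)) y.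
Proof. apply continuous_shift_reflect. intros; apply continuous_psi_up; auto. Qed.

Let continuous_psi_low_shift (z y : R) : continuous (fun t => psiL (z - t)) y.
Proof.
  apply continuous_shift_reflect. intros; apply continuous_psi_low; [lra|exact Hg4].
Qed.

Lemma kernel_conv_psi_up_le (z : R) : z2 < z ->
  RInt (fun y => J2 y * psiU (z - y)) (- S) S <=
  h * z * exp (- lam1 * z) * exp_moment J2 S 0 lam1
  + - (h * exp (- lam1 * z)) * exp_moment J2 S 1 lam1 + 0 * exp_moment J2 S 2 lam1.
Proof.
  intros Hz. apply (RInt_kernel_le_quadratic_exp J2 lh2 S HJ2 HS); [apply continuous_psi_up_shift|].
  intros y Hy.
  eapply Rle_trans; [apply (psi_up_le_profile h lam1 z1 z2 Hl1 Hh Hz2 Hroots Hz2l); lra|].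
  rewrite exp_shift. right. ring.
Qed.

Lemma kernel_conv_psi_up_le_1 (z : R) : RInt (fun y => J2 y * psiU (z - y)) (- S) S <= 1.
Proof.
  rewrite <- (RInt_kernel_1 J2 lh2 S HJ2 Hsupp).
  apply RInt_le; [lra| |apply ex_RInt_of_continuous, (kernel_continuous J2 lh2 HJ2)|].
  - apply ex_RInt_of_continuous. intros.
    apply (continuous_kernel_mul J2 lh2 HJ2), continuous_psi_up_shift.
  - intros y _. pose proof (kernel_nonneg J2 lh2 HJ2 y).
    pose proof (psi_up_le_1 h lam1 z2 Hl1 Hh Hz2 Hz2l (z - y)). nra.
Qed.

Lemma psi_up_supersolution (z : R) : z <> z2 ->
  d * Nop J2 psiU z + s * Derive psiU z + b * psiU z * (1 - psiU z / phiU z) <= 0.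
Proof.
  intros Hz. unfold Nop.
  rewrite (RInt_R_kernel_mul J2 lh2 S HJ2 Hsupp (fun y => psiU (z - y)))
    by apply continuous_psi_up_shift.
  pose proof (phi_up_range z) as Hphi.
  destruct (Rtotal_order z z2) as [Hneg|[Hzero|Hpos]]; [|contradiction|].
  - rewrite (is_derive_unique _ _ _ (is_derive_psi_up_left h lam1 z2 z Hneg)).
    replace (psiU z) with 1 by (unfold psi_up; destruct (Rle_dec z z2); lra).
    pose proof (kernel_conv_psi_up_le_1 z).
    assert (1 <= 1 / phiU z)
      by (unfold Rdiv; rewrite Rmult_1_l, <- Rinv_1; apply Rinv_le_contravar; lra).
    nra.
  - rewrite (is_derive_unique _ _ _ (is_derive_psi_up_right h lam1 z2 z Hpos)).
    replace (psiU z) with (h * z * exp (- lam1 * z)) by (unfold psi_up; destruct (Rle_dec z z2); lra).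
    set (E := exp (- lam1 * z)). assert (HE : 0 < E) by apply exp_pos.
    assert (Hconv := Rmult_le_compat_l d _ _ (Rlt_le _ _ Hd) (kernel_conv_psi_up_le z Hpos)).
    fold E in Hconv.
    rewrite (Ik_eq_exp_moment0 J2 lh2 S HJ2 Hsupp) in Hroot.
    assert (Hroot' : h * z * E * (d * (exp_moment J2 S 0 lam1 - 1) - s * lam1 + b) = 0)
      by (rewrite Hroot; ring).
    assert (Hmoment' : h * E * (d * exp_moment J2 S 1 lam1) = h * E * s) by (rewrite Hmoment; ring).
    assert (0 <= b * (h * z * E) * (h * z * E / phiU z)).
    { assert (0 < h * z * E) by (repeat apply Rmult_lt_0_compat; lra).
      apply Rmult_le_pos; [nra|]. apply Rlt_le, Rdiv_lt_0_compat; lra. }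
    lra.
Qed.

Lemma kernel_conv_psi_low_ge (z : R) : z4 < z ->
  (h * z - q * sqrt z) * exp (- lam1 * z) * exp_moment J2 S 0 lam1
  + - ((h - q / (2 * sqrt z)) * exp (- lam1 * z)) * exp_moment J2 S 1 lam1
  + q * exp (- lam1 * z) / (8 * ((z + S) * sqrt (z + S))) * exp_moment J2 S 2 lam1
  <= RInt (fun y => J2 y * psiL (z - y)) (- S) S.
Proof.
  intros Hz. apply (RInt_kernel_ge_quadratic_exp J2 lh2 S HJ2 HS); [apply continuous_psi_low_shift|].
  intros y Hy. eapply Rle_trans; [|apply g_profile_le_psi_low].
  unfold g_profile. rewrite exp_shift.
  assert (Htaylor := sqrt_sub_le_taylor z y S HS ltac:(lra) Hy).
  assert (Hsz : 0 < sqrt z) by (apply sqrt_lt_R0; lra).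
  assert (HW : 0 < (z + S) * sqrt (z + S))
    by (apply Rmult_lt_0_compat; [lra|apply sqrt_lt_R0; lra]).
  set (W := (z + S) * sqrt (z + S)) in *.
  replace ((h * z - q * sqrt z) * exp (- lam1 * z) + - ((h - q / (2 * sqrt z)) * exp (- lam1 * z)) * y
           + q * exp (- lam1 * z) / (8 * W) * y ^ 2)
    with ((h * (z - y) - q * (sqrt z - y / (2 * sqrt z) - y ^ 2 / (8 * W))) * exp (- lam1 * z))
    by (field; lra).
  rewrite Rmult_assoc. apply Rmult_le_compat_r.
  - apply Rmult_le_pos; left; apply exp_pos.
  - apply Rplus_le_compat_l, Ropp_le_contravar, Rmult_le_compat_l; lra.
Qed.

(* The nonlinear loss is dominated by the second-moment gain; this is where [q] must be large. *)
Lemma psi_low_loss_lt_gain (z : R) : z4 < z ->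
  b * psiL z * (psiL z / phiL z) <
  d * (q * exp (- lam1 * z) / (8 * ((z + S) * sqrt (z + S))) * exp_moment J2 S 2 lam1).
Proof.
  intros Hz.
  replace (psiL z) with ((h * z - q * sqrt z) * exp (- lam1 * z))
    by (unfold psi_low; destruct (Rle_dec z z4); lra).
  pose proof (phi_low_bounds lam0 z3 z Hl0) as Hphi.
  assert (Hinv : / phiL z <= 2) by (rewrite <- (Rinv_inv 2); apply Rinv_le_contravar; lra).
  assert (Hbig := Hq_large z ltac:(lra)).
  assert (Hamp := amplitude_pos z ltac:(lra)).
  assert (HW : 0 < (z + S) * sqrt (z + S))
    by (apply Rmult_lt_0_compat; [lra|apply sqrt_lt_R0; lra]).
  set (E := exp (- lam1 * z)) in *. assert (HE : 0 < E) by apply exp_pos.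
  set (u := h * z - q * sqrt z) in *.
  set (W := (z + S) * sqrt (z + S)) in *.
  assert (Huh : u * E <= h * z * E).
  { apply Rmult_le_compat_r; [lra|]. unfold u.
    pose proof (sqrt_pos z). assert (0 <= q * sqrt z) by (apply Rmult_le_pos; lra). lra. }
  assert (u * E * (u * E) <= h * z * E * (h * z * E)) by (apply Rmult_le_compat; nra).
  apply Rmult_lt_compat_r with (r := E / (8 * W)) in Hbig; [|apply Rdiv_lt_0_compat; lra].
  replace (q * (d * exp_moment J2 S 2 lam1) * (E / (8 * W)))
    with (d * (q * E / (8 * W) * exp_moment J2 S 2 lam1)) in Hbig by (field; lra).
  eapply Rle_lt_trans; [|exact Hbig].
  replace (16 * b * h ^ 2 * (z ^ 2 * W * E) * (E / (8 * W)))
    with (b * (h * z * E * (h * z * E)) * 2) by (field; lra).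
  unfold Rdiv.
  replace (b * (u * E) * (u * E * / phiL z)) with (b * (u * E * (u * E)) * / phiL z) by ring.
  apply Rle_trans with (b * (u * E * (u * E)) * 2).
  - apply Rmult_le_compat_l; [apply Rmult_le_pos; nra|exact Hinv].
  - apply Rmult_le_compat_r; [lra|]. apply Rmult_le_compat_l; lra.
Qed.

Lemma psi_low_subsolution_right (z : R) : z4 < z ->
  d * (RInt (fun y => J2 y * psiL (z - y)) (- S) S - psiL z) + s * Derive psiL z
  + b * psiL z * (1 - psiL z / phiL z) >= 0.
Proof.
  intros Hz.
  rewrite (is_derive_unique _ _ _ (is_derive_psi_low_right delta h q lam1 z4 z ltac:(lra) Hz)).
  assert (Hloss := psi_low_loss_lt_gain z Hz).
  replace (psiL z) with ((h * z - q * sqrt z) * exp (- lam1 * z)) in *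
    by (unfold psi_low; destruct (Rle_dec z z4); lra).
  assert (Hconv := Rmult_le_compat_l d _ _ (Rlt_le _ _ Hd) (kernel_conv_psi_low_ge z Hz)).
  set (E := exp (- lam1 * z)) in *.
  set (u := h * z - q * sqrt z) in *.
  set (r := h - q / (2 * sqrt z)) in *.
  rewrite (Ik_eq_exp_moment0 J2 lh2 S HJ2 Hsupp) in Hroot.
  assert (Hroot' : u * E * (d * (exp_moment J2 S 0 lam1 - 1) - s * lam1 + b) = 0)
    by (rewrite Hroot; ring).
  assert (Hmoment' : r * E * (d * exp_moment J2 S 1 lam1) = r * E * s) by (rewrite Hmoment; ring).
  lra.
Qed.

Lemma psi_low_subsolution (z : R) : z <> z4 ->
  d * Nop J2 psiL z + s * Derive psiL z + b * psiL z * (1 - psiL z / phiL z) >= 0.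
Proof.
  intros Hz. unfold Nop.
  rewrite (RInt_R_kernel_mul J2 lh2 S HJ2 Hsupp (fun y => psiL (z - y)))
    by apply continuous_psi_low_shift.
  pose proof (phi_low_bounds lam0 z3 z Hl0) as Hphi.
  assert (Hinv : 0 < / phiL z <= 2).
  { split; [apply Rinv_0_lt_compat; lra|].
    rewrite <- (Rinv_inv 2). apply Rinv_le_contravar; lra. }
  destruct (Rtotal_order z z4) as [Hneg|[Hzero|Hpos]]; [|contradiction|].
  - rewrite (is_derive_unique _ _ _ (is_derive_psi_low_left delta h q lam1 z4 z Hneg)).
    replace (psiL z) with delta by (unfold psi_low; destruct (Rle_dec z z4); lra).
    assert (0 <= RInt (fun y => J2 y * psiL (z - y)) (- S) S).
    { apply RInt_ge_0; [lra| |].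
      - apply ex_RInt_of_continuous. intros. apply (continuous_kernel_mul J2 lh2 HJ2).
        apply continuous_psi_low_shift.
      - intros y _. apply Rmult_le_pos; [apply (kernel_nonneg J2 lh2 HJ2)|left; apply psi_low_pos]. }
    assert (Hdb : 2 * b * delta < b - d).
    { apply Rmult_lt_compat_l with (r := b) in Hdelta_db; [|lra].
      replace (b * (/ 2 * (1 - d / b))) with ((b - d) / 2) in Hdelta_db by (field; lra). lra. }
    assert (b * delta * (delta / phiL z) <= b * delta * (2 * delta))
      by (apply Rmult_le_compat_l; [nra|unfold Rdiv; nra]).
    nra.
  - apply psi_low_subsolution_right; lra.
Qed.

Lemma phi_low_le_phi_up (z : R) : phiL z <= phiU z.
Proof.
  unfold phi_low, phi_up. destruct (Rle_dec z z3), (Rle_dec z 0); [lra| | lra |].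
  - assert (exp (- lam1 * z) < 1) by (apply exp_lt_1; nra).
    pose proof (exp_pos (- lam1 * z)). nra.
  - assert (exp (- lam1 * z) <= exp (- lam0 * (z - z3))).
    { destruct (Req_dec lam1 lam0); [lra|]. left. apply exp_increasing. nra. }
    pose proof (exp_pos (- lam1 * z)). nra.
Qed.

Lemma psi_low_le_psi_up (z : R) : psiL z <= psiU z.
Proof.
  pose proof (exp_pos (- lam1 * z)). pose proof (sqrt_pos z).
  unfold psi_low, psi_up. destruct (Rle_dec z z4), (Rle_dec z z2); [lra| | lra |].
  - rewrite <- Hg4. unfold g_profile.
    apply Rle_trans with (h * (z4 * exp (- lam1 * z4))).
    + pose proof (exp_pos (- lam1 * z4)). pose proof (sqrt_pos z4).
      assert (0 <= q * sqrt z4 * exp (- lam1 * z4)) by (repeat apply Rmult_le_pos; lra). nra.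
    + rewrite Rmult_assoc. apply Rmult_le_compat_l; [lra|]. apply x_exp_neg_antitone; lra.
  - assert (0 <= q * sqrt z * exp (- lam1 * z)) by (repeat apply Rmult_le_pos; lra). nra.
Qed.

Lemma profiles_derivable (z : R) : z <> 0 -> z <> z2 -> z <> z3 -> z <> z4 ->
  ex_derive phiU z /\ ex_derive psiU z /\ ex_derive phiL z /\ ex_derive psiL z.
Proof.
  intros H0 H2 H3 H4. repeat split.
  - destruct (Rtotal_order z 0) as [|[|]]; [|contradiction|]; eexists;
      [apply is_derive_phi_up_left|apply is_derive_phi_up_right]; auto.
  - destruct (Rtotal_order z z2) as [|[|]]; [|contradiction|]; eexists;
      [apply is_derive_psi_up_left|apply is_derive_psi_up_right]; auto.
  - destruct (Rtotal_order z z3) as [|[|]]; [|contradiction|]; eexists;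
      [apply is_derive_phi_low_left|apply is_derive_phi_low_right]; auto.
  - destruct (Rtotal_order z z4) as [|[|]]; [|contradiction|]; eexists;
      [apply is_derive_psi_low_left|apply is_derive_psi_low_right]; auto; lra.
Qed.

Lemma upper_lower_pair_profiles : upper_lower_pair J1 J2 a b d s phiU psiU phiL psiL.
Proof.
  split; [|split; [|split]].
  - intros z. pose proof (phi_up_range z). pose proof (phi_low_bounds lam0 z3 z Hl0).
    repeat split; [lra|apply psi_up_pos|lra|apply psi_low_pos].
  - intros z. repeat split;
      [apply continuous_phi_up|apply continuous_psi_up; auto
      |apply continuous_phi_low|apply continuous_psi_low; [lra|exact Hg4]].
  - intros z. split; [apply phi_low_le_phi_up|apply psi_low_le_psi_up].
  - exists (0 :: z2 :: z3 :: z4 :: nil). intros z Hz.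
    assert (Hz' : z <> 0 /\ z <> z2 /\ z <> z3 /\ z <> z4)
      by (repeat split; intros ->; apply Hz; simpl; tauto).
    destruct Hz' as [H0 [H2 [H3 H4]]].
    destruct (profiles_derivable z H0 H2 H3 H4) as [D1 [D2 [D3 D4]]].
    repeat split; auto using phi_up_supersolution, psi_up_supersolution,
      phi_low_subsolution, psi_low_subsolution.
Qed.

End Construction.

Lemma q_large_pointwise (b d h q S lam M : R) : 0 <= b -> 0 <= S -> 0 < lam -> 0 < d * M ->
  q > 16 * b * h ^ 2 *
      real (Lub_Rbar (fun x => exists z, 0 < z /\ x = z ^ 2 * Rpower (z + S) (3 / 2) * exp (- lam * z)))
      / (d * M) ->
  forall z, 0 < z ->
  16 * b * h ^ 2 * (z ^ 2 * ((z + S) * sqrt (z + S)) * exp (- lam * z)) < q * (d * M).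
Proof.
  intros Hb HS Hl HdM Hq z Hz.
  assert (HL := le_Lub_Rbar_pos (fun z => z ^ 2 * Rpower (z + S) (3 / 2) * exp (- lam * z)) _ z
                  (fun x Hx => polynomial_exp_weight_bound S lam x HS Hl Hx) Hz).
  cbv beta in HL. rewrite Rpower_3_2 in HL at 1 by lra.
  apply Rlt_div_l in Hq; [|lra].
  eapply Rle_lt_trans; [|exact Hq].
  apply Rmult_le_compat_l; [pose proof (pow2_ge_0 h); nra|exact HL].
Qed.

Theorem lemma2p4
  (a b d : R) (J1 J2 : R -> R) (lamhat1 lamhat2 : Rbar) (S : R)
  (lam1 lam0 h z1 z2 z3 q zM delta z4 eps : R) :
  4 <= a -> 0 < b -> 0 < d -> d < b ->
  kernel_ok J1 lamhat1 -> kernel_ok J2 lamhat2 ->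
  0 < S -> (forall y, J2 y <> 0 -> - S <= y <= S) ->
  (* lam1: the double root of A(lam) = d [I2(lam) - 1] - s* lam + b = 0 *)
  0 < lam1 -> Rbar_lt lam1 lamhat2 ->
  d * (Ik J2 lam1 - 1) - s_star J2 lamhat2 d b * lam1 + b = 0 ->
  (* lam0 *)
  0 < lam0 -> lam0 < lam1 -> Rbar_lt lam0 lamhat1 ->
  Ik J1 lam0 - 1 - s_star J2 lamhat2 d b * lam0 < 0 ->
  (* h, z1, z2 *)
  h > lam1 * exp 1 ->
  h * z1 * exp (- lam1 * z1) = 1 -> h * z2 * exp (- lam1 * z2) = 1 ->
  (forall z, h * z * exp (- lam1 * z) = 1 -> z = z1 \/ z = z2) ->
  0 < z1 -> z1 < / lam1 -> / lam1 < z2 -> z2 - z1 > S ->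
  (* z3 *)
  z3 > z2 -> h * exp (- lam0 * z3) <= a * (lam1 - lam0) * exp 1 / 4 ->
  (* q, z0 = (q/h)^2 *)
  0 < q -> (q / h) ^ 2 > z2 ->
  q > 16 * b * h ^ 2 *
      real (Lub_Rbar (fun x => exists z, 0 < z /\
               x = z ^ 2 * Rpower (z + S) (3 / 2) * exp (- lam1 * z)))
      / (d * RInt_R (fun y => J2 y * y ^ 2 * exp (lam1 * y))) ->
  (* zM: the unique maximum point of g(z) = (h z - q sqrt z) e^{-lam1 z}, z >= 0 *)
  (q / h) ^ 2 < zM ->
  (forall z, 0 <= z ->
     (h * z - q * sqrt z) * exp (- lam1 * z) <= (h * zM - q * sqrt zM) * exp (- lam1 * zM)) ->
  (forall z, 0 <= z ->
     (h * z - q * sqrt z) * exp (- lam1 * z) = (h * zM - q * sqrt zM) * exp (- lam1 * zM) ->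
     z = zM) ->
  (* delta *)
  0 < delta ->
  delta < (h * zM - q * sqrt zM) * exp (- lam1 * zM) ->
  delta < 1 - 1 / a -> delta < / 2 * (1 - d / b) ->
  (* z4 *)
  (q / h) ^ 2 < z4 -> z4 < zM ->
  (h * z4 - q * sqrt z4) * exp (- lam1 * z4) = delta ->
  (* eps *)
  0 < eps ->
  eps < Rmin delta (h * z4 - q * sqrt z4) / (1 + s_star J2 lamhat2 d b * lam1 + a) ->
  upper_lower_pair J1 J2 a b d (s_star J2 lamhat2 d b)
    (phi_up eps lam1) (psi_up h lam1 z2)
    (phi_low lam0 z3) (psi_low delta h q lam1 z4).
Proof.
  (* Not needed: the equation for z1, [z1 < / lam1], the hypotheses on zM other than
     [delta < g zM], and [delta < 1 - 1 / a]. *)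
  intros Ha Hb Hd Hdb HJ1 HJ2 HS Hsupp Hl1 Hl1h Hroot Hl0 Hl01 Hl0h HI1 Hh _ Hz2 Hroots
    Hz1 _ Hz2l Hz12 Hz3 Hz3h Hq Hqz2 Hq_large _ _ _ Hdelta HgM _ Hdelta_db Hz4 Hz4M Hg4 Heps Heps_small.
  destruct (s_star_spec J2 lamhat2 S HJ2 HS Hsupp b d lam1 Hd Hdb Hl1 Hl1h) as [Hs Hs_min].
  assert (Hmoment := double_root_first_moment J2 lamhat2 S HJ2 HS Hsupp b d _ lam1
                       Hd Hl1 Hl1h Hs_min Hroot).
  assert (Hm2 := exp_moment2_pos J2 lamhat2 S HJ2 HS Hsupp lam1).
  rewrite (RInt_R_pow_exp J2 lamhat2 S HJ2 Hsupp 2 lam1) in Hq_large.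
  apply (upper_lower_pair_profiles a b d _ J1 J2 lamhat1 lamhat2 S
           lam0 lam1 h z1 z2 z3 q zM delta z4 eps);
    auto; try lra.
  - apply q_large_pointwise; [lra|lra|lra|nra|exact Hq_large].
  - apply Rlt_div_r; [nra|exact Heps_small].
Qed.
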